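(* Let $\gamma>1$ and $b\in\mathbb{R}$, and consider the ODE system $$\frac{dR_1}{dt}=-R_1^2+bR_2^2,\qquad \frac{dR_2}{dt}=-\frac{\gamma+1}{2}R_1R_2,$$ with initial data $(R_1(0),R_2(0))=(R_1^0,R_2^0)\in\mathbb{R}^2$. Then: (a) on any interval where the solution exists and $R_2\neq 0$, the quantity $\big(R_1^2+\frac{2b}{\gamma-1}R_2^2\big)|R_2|^{-\frac{4}{\gamma+1}}$ is constant; (b) the solution exists and remains bounded for all $t\ge 0$ if and only if one of the following holds: ($b\ge 0$ and $R_1^0\ge 0$); ($b>0$ and $R_2^0\ne 0$); ($b<0$, $R_1^0\ge 0$ and $(R_1^0)^2+\frac{2b}{\gamma-1}(R_2^0)^2\ge 0$); ($R_2^0=0$ and $R_1^0\ge 0$). In all other cases the solution becomes unbounded in finite time. *)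

From Stdlib Require Import Reals.
Open Scope R_scope.

Definition ode_on (b g a c : R) (R1 R2 : R -> R) : Prop :=
  forall t, a < t < c ->
    derivable_pt_lim R1 t (- (R1 t) ^ 2 + b * (R2 t) ^ 2) /\
    derivable_pt_lim R2 t (- ((g + 1) / 2) * R1 t * R2 t).

Definition right_cont0 (f : R -> R) : Prop :=
  forall eps, eps > 0 -> exists d, d > 0 /\
    forall t, 0 <= t < d -> Rabs (f t - f 0) < eps.

Definition ivp_sol_upto (b g T R10 R20 : R) (R1 R2 : R -> R) : Prop :=
  ode_on b g 0 T R1 R2 /\ right_cont0 R1 /\ right_cont0 R2 /\
  R1 0 = R10 /\ R2 0 = R20.

Definition ivp_sol_global (b g R10 R20 : R) (R1 R2 : R -> R) : Prop :=
  (forall T, T > 0 -> ode_on b g 0 T R1 R2) /\ right_cont0 R1 /\ right_cont0 R2 /\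
  R1 0 = R10 /\ R2 0 = R20.

Definition invariant (b g r1 r2 : R) : R :=
  (r1 ^ 2 + (2 * b / (g - 1)) * r2 ^ 2) * Rpower (Rabs r2) (- (4 / (g + 1))).

Definition global_condition (b g R10 R20 : R) : Prop :=
  (b >= 0 /\ R10 >= 0) \/
  (b > 0 /\ R20 <> 0) \/
  (b < 0 /\ R10 >= 0 /\ R10 ^ 2 + (2 * b / (g - 1)) * R20 ^ 2 >= 0) \/
  (R20 = 0 /\ R10 >= 0).

From Stdlib Require Import Reals Lra Lia Psatz Classical ClassicalEpsilon.
From Coquelicot Require Import Coquelicot.
Open Scope R_scope.

(* Along a solution Q = R2^2 satisfies Q' = -(g+1) R1 Q, so R2 keeps its sign, and the energy
   E = R1^2 + 2b/(g-1) R2^2 satisfies E' = -2 R1 E; hence E |R2|^(-4/(g+1)) is conserved.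

   In the four good cases this yields a priori bounds.  For b > 0 the conservation law bounds |R2|,
   and then R1.  When b R2^2 vanishes, R1 is the explicit Riccati solution R10 / (1 + R10 t).  For
   b < 0 and nonnegative energy R1 can never vanish, so it stays positive and decreasing while R2^2
   decreases.  In the remaining cases R1' <= -R1^2 with R1 < 0 holds, either from the start or
   after a bounded time (for negative energy |R2| stays away from 0, so R1 decreases at a linear
   rate), and comparison with the Riccati equation forces blowup in finite time.

   Solutions are built by Picard iteration for the vector field truncated outside a box.  With an a
   priori bound the truncated solution never leaves the box and solves the ODE globally; otherwise
   the truncations at growing levels leave their boxes before a uniform time, agree with each other
   by uniqueness, and glue to a solution that is unbounded near the supremum of the exit times. *)

Lemma continuous_eps_delta (f : R -> R) x :
  continuous f x <->
  forall eps, 0 < eps -> exists d, 0 < d /\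
    forall y, Rabs (y - x) < d -> Rabs (f y - f x) < eps.
Proof.
  unfold continuous; rewrite <- continuity_pt_filterlim. split.
  - intros H eps Heps. destruct (H eps Heps) as [d [Hd Hf]].
    exists d; split; [exact Hd|]. intros y Hy.
    destruct (Req_dec y x) as [->|Hne].
    + rewrite Rminus_eq_0, Rabs_R0; exact Heps.
    + apply Hf. split; [split; [exact I| auto]| exact Hy].
  - intros H eps Heps. destruct (H eps Heps) as [d [Hd Hf]].
    exists d; split; [exact Hd|]. intros y [_ Hy]. apply Hf, Hy.
Qed.

Lemma derivable_pt_lim_continuous (f : R -> R) x l :
  derivable_pt_lim f x l -> continuous f x.
Proof.
  intros H. apply (ex_derive_continuous (V := R_NormedModule)). exists l. apply is_derive_Reals, H.
Qed.

Lemma lipschitz_continuous (u : R -> R) K x :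
  (forall y z, Rabs (u y - u z) <= K * Rabs (y - z)) -> continuous u x.
Proof.
  intros Hu. apply continuous_eps_delta. intros eps He.
  assert (HK : 0 <= K).
  { specialize (Hu 1 0). rewrite Rminus_0_r, Rabs_R1 in Hu. pose proof (Rabs_pos (u 1 - u 0)). lra. }
  exists (eps / (K + 1)). split; [apply Rdiv_lt_0_compat; lra|].
  intros y Hy. eapply Rle_lt_trans; [apply Hu|].
  apply Rle_lt_trans with ((K + 1) * Rabs (y - x)); [pose proof (Rabs_pos (y - x)); nra|].
  apply Rmult_lt_reg_l with (/ (K + 1)); [apply Rinv_0_lt_compat; lra|].
  rewrite <- Rmult_assoc, Rinv_l by lra. unfold Rdiv in Hy. lra.
Qed.

Lemma continuous_lipschitz2 (F : R -> R -> R) L (u v : R -> R) x :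
  (forall a b c d, Rabs (F a b - F c d) <= L * (Rabs (a - c) + Rabs (b - d))) ->
  continuous u x -> continuous v x -> continuous (fun s => F (u s) (v s)) x.
Proof.
  intros HF Hu Hv. apply continuous_eps_delta. intros eps He.
  rewrite continuous_eps_delta in Hu, Hv.
  assert (HL : 0 <= L).
  { specialize (HF 1 0 0 0). rewrite !Rminus_0_r, Rabs_R1, Rabs_R0 in HF.
    pose proof (Rabs_pos (F 1 0 - F 0 0)). lra. }
  set (e := eps / (2 * (L + 1))). assert (Hep : 0 < e) by (apply Rdiv_lt_0_compat; lra).
  destruct (Hu e Hep) as [d1 [Hd1 H1]]. destruct (Hv e Hep) as [d2 [Hd2 H2]].
  exists (Rmin d1 d2). split; [apply Rmin_pos; lra|]. intros y Hy.
  specialize (H1 y ltac:(pose proof (Rmin_l d1 d2); lra)).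
  specialize (H2 y ltac:(pose proof (Rmin_r d1 d2); lra)).
  eapply Rle_lt_trans; [apply HF|].
  pose proof (Rabs_pos (u y - u x)); pose proof (Rabs_pos (v y - v x)).
  apply Rle_lt_trans with ((L + 1) * (Rabs (u y - u x) + Rabs (v y - v x))); [nra|].
  apply Rlt_le_trans with ((L + 1) * (2 * e)); [apply Rmult_lt_compat_l; lra|].
  right; unfold e; field; lra.
Qed.

(* Folding by [Rabs] turns right continuity at 0 into continuity, so the closure properties of
   [right_cont0] below come from those of [continuous]. *)
Lemma right_cont0_continuous_abs (f : R -> R) :
  right_cont0 f <-> continuous (fun t => f (Rabs t)) 0.
Proof.
  rewrite continuous_eps_delta. cbv beta. setoid_rewrite Rabs_R0. split.
  - intros H eps He. destruct (H eps He) as [d [Hd Hf]].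
    exists d; split; [exact Hd|]. intros y Hy. rewrite Rminus_0_r in Hy.
    apply Hf. split; [apply Rabs_pos| exact Hy].
  - intros H eps He. destruct (H eps He) as [d [Hd Hf]].
    exists d; split; [lra|]. intros t Ht. specialize (Hf t).
    rewrite Rminus_0_r, Rabs_pos_eq in Hf by lra. apply Hf. lra.
Qed.

Lemma continuous_right_cont0 (f : R -> R) : continuous f 0 -> right_cont0 f.
Proof.
  intros H. apply right_cont0_continuous_abs.
  apply (continuous_comp Rabs f). { apply continuous_Rabs_comp, continuous_id. }
  rewrite Rabs_R0. exact H.
Qed.

Lemma right_cont0_comp (f h : R -> R) :
  right_cont0 f -> continuous h (f 0) -> right_cont0 (fun t => h (f t)).
Proof.
  rewrite !right_cont0_continuous_abs. intros Hf Hh.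
  apply (continuous_comp (fun t => f (Rabs t)) h); [exact Hf|]. rewrite Rabs_R0. exact Hh.
Qed.

Lemma right_cont0_plus (f g : R -> R) :
  right_cont0 f -> right_cont0 g -> right_cont0 (fun t => f t + g t).
Proof. rewrite !right_cont0_continuous_abs. apply (continuous_plus (V := R_NormedModule)). Qed.

Lemma right_cont0_mult (f g : R -> R) :
  right_cont0 f -> right_cont0 g -> right_cont0 (fun t => f t * g t).
Proof. rewrite !right_cont0_continuous_abs. apply (continuous_mult (K := R_AbsRing)). Qed.

Lemma right_cont0_opp (f : R -> R) : right_cont0 f -> right_cont0 (fun t => - f t).
Proof.
  intros H. apply (right_cont0_comp f (fun x => - x)); [exact H|].
  apply (continuous_opp (V := R_NormedModule)), continuous_id.
Qed.

Lemma right_cont0_sqr (f : R -> R) : right_cont0 f -> right_cont0 (fun t => f t ^ 2).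
Proof.
  intros H. apply (right_cont0_comp f (fun x => x ^ 2)); [exact H|].
  apply (derivable_pt_lim_continuous _ _ (INR 2 * f 0 ^ 1)), derivable_pt_lim_pow.
Qed.

Lemma derivable_nonpos_nonincreasing (f df : R -> R) a c :
  (forall t, a < t < c -> derivable_pt_lim f t (df t)) ->
  (forall t, a < t < c -> df t <= 0) ->
  forall s t, a < s -> s <= t -> t < c -> f t <= f s.
Proof.
  intros Hd Hn s t Hs Hst Ht.
  destruct (Req_dec s t) as [->|Hne]; [lra|].
  destruct (MVT_cor2 f df s t ltac:(lra)) as [x [Hx Hx2]].
  { intros x Hx. apply Hd. lra. }
  assert (df x <= 0) by (apply Hn; lra).
  nra.
Qed.

Lemma derivable_nonpos_le_initial (f df : R -> R) c :
  (forall t, 0 < t < c -> derivable_pt_lim f t (df t)) ->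
  (forall t, 0 < t < c -> df t <= 0) -> right_cont0 f ->
  forall t, 0 < t < c -> f t <= f 0.
Proof.
  intros Hd Hn Hr t Ht.
  destruct (Rle_dec (f t) (f 0)) as [|Hgt]; [auto|exfalso].
  destruct (Hr (f t - f 0) ltac:(lra)) as [d [Hdp H1]].
  set (s := Rmin (d / 2) t).
  assert (0 < s) by (apply Rmin_pos; lra).
  assert (s <= t) by apply Rmin_r. assert (s <= d / 2) by apply Rmin_l.
  specialize (H1 s ltac:(lra)).
  pose proof (derivable_nonpos_nonincreasing f df 0 c Hd Hn s t ltac:(lra) ltac:(lra) ltac:(lra)).
  apply Rabs_lt_between in H1. lra.
Qed.

Lemma derivable_zero_constant (f : R -> R) a c :
  (forall t, a < t < c -> derivable_pt_lim f t 0) ->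
  forall s t, a < s < c -> a < t < c -> f s = f t.
Proof.
  intros Hd.
  assert (H : forall s t, a < s < c -> a < t < c -> s < t -> f s = f t).
  { intros s t Hs Ht Hst. apply (eq_is_derive (V := R_NormedModule)); [|exact Hst].
    intros u Hu. apply is_derive_Reals, Hd. lra. }
  intros s t Hs Ht. destruct (Rtotal_order s t) as [Hlt|[->|Hgt]]; auto.
  symmetry; auto.
Qed.

Lemma right_cont0_constant_extends (h : R -> R) c : right_cont0 h ->
  (forall s t, 0 < s < c -> 0 < t < c -> h s = h t) -> forall t, 0 < t < c -> h t = h 0.
Proof.
  intros Hr He t Ht. destruct (Req_dec (h t) (h 0)) as [|Hn]; auto. exfalso.
  destruct (Hr (Rabs (h t - h 0)) ltac:(apply Rabs_pos_lt; lra)) as [d [Hd H1]].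
  set (s := Rmin (d / 2) t). assert (0 < s) by (apply Rmin_pos; lra).
  assert (s <= d / 2) by apply Rmin_l. assert (s <= t) by apply Rmin_r.
  specialize (H1 s ltac:(lra)). rewrite (He s t) in H1 by lra. lra.
Qed.

(* [tau] is the supremum of the times up to which [f] stays positive. *)
Lemma first_nonpositive_time (f : R -> R) t :
  0 <= t -> right_cont0 f -> 0 < f 0 -> (forall x, 0 < x <= t -> continuous f x) -> f t <= 0 ->
  exists tau, 0 < tau <= t /\ (forall y, 0 <= y < tau -> 0 < f y) /\ f tau <= 0.
Proof.
  intros Ht0 Hr H0 Hc Ht.
  destruct (Hr (f 0) H0) as [d [Hd Hd1]].
  assert (Hpos : forall y, 0 <= y < d -> 0 < f y).
  { intros y Hy. specialize (Hd1 y Hy). apply Rabs_lt_between in Hd1. lra. }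
  assert (Htd : d <= t).
  { destruct (Rle_dec d t); auto. specialize (Hpos t ltac:(lra)). lra. }
  set (E := fun x => 0 <= x <= t /\ forall y, 0 <= y <= x -> 0 < f y).
  assert (HB : bound E) by (exists t; intros x [Hx _]; lra).
  assert (HE : exists x, E x).
  { exists 0. split; [lra|]. intros y Hy. replace y with 0 by lra. auto. }
  destruct (completeness E HB HE) as [s [Hub Hlub]].
  assert (Hs1 : d / 2 <= s) by (apply Hub; split; [lra|]; intros y Hy; apply Hpos; lra).
  assert (Hs2 : s <= t) by (apply Hlub; intros x [Hx _]; lra).
  assert (Hbel : forall y, 0 <= y < s -> 0 < f y).
  { intros y Hy. apply NNPP; intros Hn.
    assert (s <= y); [|lra].
    apply Hlub. intros x [Hx1 Hx2]. destruct (Rle_dec x y); auto.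
    exfalso; apply Hn, Hx2; lra. }
  exists s. split; [lra|]. split; [exact Hbel|].
  destruct (Rle_dec (f s) 0) as [|Hgt]; [auto|exfalso].
  apply Rnot_le_lt in Hgt.
  destruct (Rle_lt_or_eq_dec s t Hs2) as [Hlt|Heq]; [|subst; lra].
  destruct (proj1 (continuous_eps_delta f s) (Hc s ltac:(lra)) (f s) Hgt) as [e [He He1]].
  set (x := Rmin (s + e / 2) t).
  assert (s < x) by (apply Rmin_glb_lt; lra).
  assert (x <= s + e / 2) by apply Rmin_l. assert (x <= t) by apply Rmin_r.
  assert (HEx : E x).
  { split; [lra|]. intros y Hy. destruct (Rlt_dec y s); [apply Hbel; lra|].
    specialize (He1 y ltac:(rewrite Rabs_right; lra)). apply Rabs_lt_between in He1. lra. }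
  specialize (Hub x HEx). lra.
Qed.

Lemma continuous_le_of_le_left (f : R -> R) tau B :
  continuous f tau -> 0 < tau -> (forall y, 0 < y < tau -> f y <= B) -> f tau <= B.
Proof.
  intros Hc Ht Hb. destruct (Rle_dec (f tau) B) as [|Hn]; auto. exfalso.
  destruct (proj1 (continuous_eps_delta f tau) Hc (f tau - B) ltac:(lra)) as [d [Hd H1]].
  set (y := Rmax (tau / 2) (tau - d / 2)).
  assert (tau / 2 <= y) by apply Rmax_l. assert (tau - d / 2 <= y) by apply Rmax_r.
  assert (y < tau) by (apply Rmax_lub_lt; lra).
  specialize (H1 y ltac:(rewrite Rabs_left; lra)). specialize (Hb y ltac:(lra)).
  apply Rabs_lt_between in H1. lra.
Qed.

Lemma positive_of_nonvanishing (f : R -> R) c : right_cont0 f -> 0 < f 0 ->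
  (forall x, 0 < x < c -> continuous f x) -> (forall x, 0 < x < c -> f x <> 0) ->
  forall t, 0 < t < c -> 0 < f t.
Proof.
  intros Hr H0 Hc Hn t Ht. destruct (Rlt_or_le 0 (f t)) as [|Hle]; auto. exfalso.
  destruct (first_nonpositive_time f t ltac:(lra) Hr H0 ltac:(intros; apply Hc; lra) Hle)
    as [s [Hs [Hpos Hfs]]].
  assert (f s < 0) by (destruct (Rle_lt_or_eq_dec _ _ Hfs); auto; exfalso; apply (Hn s); lra).
  assert (- f s <= 0); [|lra].
  apply (continuous_le_of_le_left (fun x => - f x) s 0); [|lra|].
  - apply (continuous_opp (V := R_NormedModule)), Hc. lra.
  - intros y Hy. specialize (Hpos y ltac:(lra)). lra.
Qed.

Lemma first_exit_time (N : R -> R) Lv t0 : (forall x, continuous N x) -> N 0 < Lv -> 0 <= t0 ->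
  Lv <= N t0 -> exists tau, 0 < tau <= t0 /\ (forall t, 0 <= t < tau -> N t < Lv) /\ Lv <= N tau.
Proof.
  intros Hc H0 Ht0 Ht.
  assert (HcL : forall x, continuous (fun t => Lv - N t) x)
    by (intros x; apply (continuous_minus (V := R_NormedModule)); [apply continuous_const| apply Hc]).
  destruct (first_nonpositive_time (fun t => Lv - N t) t0 Ht0) as [tau [Htau [Hpos Hf]]];
    [apply continuous_right_cont0, HcL| lra| intros; apply HcL| lra|].
  exists tau. split; [exact Htau|]. split; [|lra]. intros t Ht'. specialize (Hpos t Ht'). lra.
Qed.

Lemma right_cont0_agree (f h : R -> R) d : 0 < d -> (forall t, 0 <= t < d -> f t = h t) ->
  right_cont0 f -> right_cont0 h.
Proof.
  intros Hd He Hf eps Heps. destruct (Hf eps Heps) as [d' [Hd' H]].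
  exists (Rmin d d'). split; [apply Rmin_pos; lra|]. intros t Ht.
  pose proof (Rmin_l d d'). pose proof (Rmin_r d d').
  rewrite <- !He by lra. apply H. lra.
Qed.

Lemma derivable_pt_lim_exp_scal K s :
  derivable_pt_lim (fun u => exp (K * u)) s (K * exp (K * s)).
Proof.
  replace (K * exp (K * s)) with (exp (K * s) * (K * 1)) by ring.
  apply (derivable_pt_lim_comp (fun u => K * u) exp).
  - apply derivable_pt_lim_scal, derivable_pt_lim_id.
  - apply derivable_pt_lim_exp.
Qed.

Lemma gronwall_upper (f df : R -> R) c K :
  (forall t, 0 < t < c -> derivable_pt_lim f t (df t)) ->
  (forall t, 0 < t < c -> df t <= K * f t) -> right_cont0 f ->
  forall t, 0 < t < c -> f t <= f 0 * exp (K * t).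
Proof.
  intros Hd Hb Hr t Ht.
  set (h := fun s => f s * exp (- K * s)).
  assert (Hh : forall s, 0 < s < c ->
    derivable_pt_lim h s (df s * exp (- K * s) + f s * (- K * exp (- K * s)))).
  { intros s Hs. apply (derivable_pt_lim_mult f (fun u => exp (- K * u)) s); [auto|].
    apply derivable_pt_lim_exp_scal. }
  assert (Hrh : right_cont0 h).
  { apply right_cont0_mult; [exact Hr|]. apply continuous_right_cont0.
    apply (derivable_pt_lim_continuous _ _ _ (derivable_pt_lim_exp_scal (- K) 0)). }
  assert (Hm : h t <= h 0).
  { apply (derivable_nonpos_le_initial h _ c Hh); auto.
    intros s Hs. specialize (Hb s Hs). pose proof (exp_pos (- K * s)). nra. }
  unfold h in Hm. rewrite Rmult_0_r, exp_0, Rmult_1_r in Hm.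
  apply Rmult_le_compat_r with (r := exp (K * t)) in Hm; [|left; apply exp_pos].
  rewrite Rmult_assoc, <- exp_plus in Hm. replace (- K * t + K * t) with 0 in Hm by ring.
  rewrite exp_0, Rmult_1_r in Hm. exact Hm.
Qed.

Lemma gronwall_lower (f df : R -> R) c K :
  (forall t, 0 < t < c -> derivable_pt_lim f t (df t)) ->
  (forall t, 0 < t < c -> - K * f t <= df t) -> right_cont0 f ->
  forall t, 0 < t < c -> f 0 * exp (- K * t) <= f t.
Proof.
  intros Hd Hb Hr t Ht.
  assert (- f t <= - f 0 * exp (- K * t)); [|lra].
  apply (gronwall_upper (fun s => - f s) (fun s => - df s) c (- K)); auto.
  - intros s Hs. apply derivable_pt_lim_opp; auto.
  - intros s Hs. specialize (Hb s Hs). lra.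
  - apply right_cont0_opp, Hr.
Qed.

Lemma derivable_pt_lim_ext_near (f g : R -> R) x l :
  (exists d, 0 < d /\ forall s, Rabs (s - x) < d -> f s = g s) ->
  derivable_pt_lim f x l -> derivable_pt_lim g x l.
Proof.
  intros [d [Hd He]] Hf eps Heps. destruct (Hf eps Heps) as [dl Hdl].
  assert (Hp : 0 < Rmin dl d) by (apply Rmin_pos; [apply cond_pos| lra]).
  exists (mkposreal _ Hp). intros h Hh Hh2. simpl in Hh2.
  assert (Rabs h < dl) by (pose proof (Rmin_l dl d); lra).
  assert (Rabs h < d) by (pose proof (Rmin_r dl d); lra).
  rewrite <- (He (x + h)) by (replace (x + h - x) with h by ring; lra).
  rewrite <- (He x) by (rewrite Rminus_eq_0, Rabs_R0; lra).
  apply Hdl; auto.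
Qed.

Lemma ex_RInt_continuous_R (g : R -> R) a b : (forall x, continuous g x) -> ex_RInt g a b.
Proof. intros H. apply (ex_RInt_continuous (V := R_CompleteNormedModule)). intros; apply H. Qed.

Lemma derivable_pt_lim_RInt (g : R -> R) x0 t :
  (forall x, continuous g x) -> derivable_pt_lim (fun u => x0 + RInt g 0 u) t (g t).
Proof.
  intros Hg. rewrite <- (Rplus_0_l (g t)).
  apply derivable_pt_lim_plus; [apply derivable_pt_lim_const|]. apply is_derive_Reals.
  apply (is_derive_RInt (V := R_CompleteNormedModule) g (fun u => RInt g 0 u) 0 t); [|apply Hg].
  apply filter_forall. intros u. apply (RInt_correct (V := R_CompleteNormedModule)).
  apply ex_RInt_continuous_R, Hg.
Qed.

Lemma RInt_minus_R (h1 h2 : R -> R) a b : (forall x, continuous h1 x) -> (forall x, continuous h2 x) ->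
  RInt h1 a b - RInt h2 a b = RInt (fun s => h1 s - h2 s) a b.
Proof.
  intros H1 H2. symmetry.
  apply (RInt_minus (V := R_CompleteNormedModule)); apply ex_RInt_continuous_R; auto.
Qed.

Lemma RInt_primitive_lipschitz (h : R -> R) B a b :
  (forall x, continuous h x) -> (forall x, Rabs (h x) <= B) ->
  Rabs (RInt h 0 a - RInt h 0 b) <= B * Rabs (a - b).
Proof.
  intros Hc HB.
  assert (E : RInt h 0 a = RInt h 0 b + RInt h b a).
  { symmetry. apply (RInt_Chasles (V := R_CompleteNormedModule)); apply ex_RInt_continuous_R; auto. }
  rewrite E, Rplus_minus_l.
  destruct (Rle_dec b a).
  - rewrite (Rabs_right (a - b)), Rmult_comm by lra.
    apply abs_RInt_le_const; auto. apply ex_RInt_continuous_R; auto.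
  - rewrite <- (opp_RInt_swap h a b) by (apply ex_RInt_continuous_R; auto).
    change (opp (RInt h a b)) with (- RInt h a b).
    rewrite Rabs_Ropp, (Rabs_left (a - b)), Rmult_comm by lra.
    replace (- (a - b)) with (b - a) by ring.
    apply abs_RInt_le_const; [lra| |auto]. apply ex_RInt_continuous_R; auto.
Qed.

Lemma RInt_diff_le_const (h1 h2 : R -> R) t K : 0 <= t ->
  (forall x, continuous h1 x) -> (forall x, continuous h2 x) ->
  (forall s, 0 <= s <= t -> Rabs (h1 s - h2 s) <= K) ->
  Rabs (RInt h1 0 t - RInt h2 0 t) <= t * K.
Proof.
  intros Ht H1 H2 Hb. rewrite RInt_minus_R by auto.
  replace t with (t - 0) at 2 by ring.
  apply abs_RInt_le_const; auto. apply ex_RInt_continuous_R.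
  intros x. apply (continuous_minus (V := R_NormedModule)); auto.
Qed.

Lemma RInt_diff_le_exp (h1 h2 : R -> R) t K a : 0 <= t -> 0 < a ->
  (forall x, continuous h1 x) -> (forall x, continuous h2 x) ->
  (forall s, 0 <= s <= t -> Rabs (h1 s - h2 s) <= K * exp (a * s)) ->
  Rabs (RInt h1 0 t - RInt h2 0 t) <= K * (exp (a * t) - 1) / a.
Proof.
  intros Ht Ha H1 H2 Hb.
  assert (Hexp : forall x, continuous (fun s => K * exp (a * s)) x).
  { intros x. apply (continuous_mult (K := R_AbsRing)); [apply continuous_const|].
    apply (derivable_pt_lim_continuous _ _ _ (derivable_pt_lim_exp_scal a x)). }
  assert (HI : RInt (fun s => K * exp (a * s)) 0 t = K * (exp (a * t) - 1) / a).
  { apply is_RInt_unique.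
    replace (K * (exp (a * t) - 1) / a) with (minus (K / a * exp (a * t)) (K / a * exp (a * 0)))
      by (rewrite Rmult_0_r, exp_0; unfold minus, plus, opp; simpl; field; lra).
    apply (is_RInt_derive (fun s => K / a * exp (a * s))); [|intros; apply Hexp].
    intros x _. apply is_derive_Reals.
    replace (K * exp (a * x)) with (K / a * (a * exp (a * x))) by (field; lra).
    apply derivable_pt_lim_scal, derivable_pt_lim_exp_scal. }
  rewrite <- HI, RInt_minus_R by auto.
  eapply Rle_trans; [apply abs_RInt_le; auto|].
  - apply ex_RInt_continuous_R. intros x. apply (continuous_minus (V := R_NormedModule)); auto.
  - apply RInt_le; auto.
    + apply ex_RInt_continuous_R. intros x. apply continuous_Rabs_comp.
      apply (continuous_minus (V := R_NormedModule)); auto.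
    + apply ex_RInt_continuous_R; auto.
    + intros; apply Hb; lra.
Qed.

Lemma le_of_le_geometric x c D : (forall n, x <= c + D * (/ 2) ^ n) -> x <= c.
Proof.
  intros H. destruct (Rle_dec x c) as [|Hn]; auto. exfalso.
  assert (HD : 0 < D) by (specialize (H 0%nat); simpl in H; lra).
  destruct (pow_lt_1_zero (/ 2) ltac:(rewrite Rabs_right; lra) ((x - c) / D)) as [N HN].
  { apply Rdiv_lt_0_compat; lra. }
  specialize (HN N (le_n _)). specialize (H N).
  rewrite Rabs_right in HN by (apply Rle_ge, pow_le; lra).
  apply (Rmult_lt_compat_l D) in HN; auto.
  replace (D * ((x - c) / D)) with (x - c) in HN by (field; lra). lra.
Qed.

Lemma geometric_telescope (a : nat -> R) W :
  (forall k, Rabs (a (S k) - a k) <= W * (/ 2) ^ k) ->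
  forall n m, (n <= m)%nat -> Rabs (a m - a n) <= 2 * W * (/ 2) ^ n.
Proof.
  intros H n m Hnm.
  assert (HW : 0 <= W)
    by (specialize (H 0%nat); simpl in H; pose proof (Rabs_pos (a 1%nat - a 0%nat)); lra).
  assert (Hj : forall j, Rabs (a (n + j)%nat - a n) <= 2 * W * (/ 2) ^ n * (1 - (/ 2) ^ j)).
  { induction j.
    - rewrite Nat.add_0_r, Rminus_eq_0, Rabs_R0. simpl. lra.
    - replace (n + S j)%nat with (S (n + j)) by lia.
      replace (a (S (n + j)) - a n)
        with ((a (S (n + j)) - a (n + j)%nat) + (a (n + j)%nat - a n)) by ring.
      eapply Rle_trans; [apply Rabs_triang|]. specialize (H (n + j)%nat).
      rewrite pow_add in H. simpl. lra. }
  replace m with (n + (m - n))%nat by lia.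
  eapply Rle_trans; [apply Hj|].
  assert (0 <= (/ 2) ^ (m - n)) by (apply pow_le; lra).
  assert (0 <= W * (/ 2) ^ n) by (apply Rmult_le_pos; [lra| apply pow_le; lra]).
  nra.
Qed.

Lemma geometric_limit_bound (a : nat -> R) W :
  (forall k, Rabs (a (S k) - a k) <= W * (/ 2) ^ k) ->
  forall n, Rabs (real (Lim_seq a) - a n) <= 2 * W * (/ 2) ^ n.
Proof.
  intros H. pose proof (geometric_telescope a W H) as Hb.
  assert (HW : 0 <= W)
    by (specialize (H 0%nat); simpl in H; pose proof (Rabs_pos (a 1%nat - a 0%nat)); lra).
  assert (Hc : ex_finite_lim_seq a).
  { apply ex_lim_seq_cauchy_corr. intros eps.
    destruct (pow_lt_1_zero (/ 2) ltac:(rewrite Rabs_right; lra) (eps / (2 * W + 1)))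
      as [N HN]; [apply Rdiv_lt_0_compat; [apply cond_pos| lra]|].
    assert (Hsmall : forall k, (k >= N)%nat -> 2 * W * (/ 2) ^ k < eps).
    { intros k Hk. specialize (HN k Hk). rewrite Rabs_right in HN by (apply Rle_ge, pow_le; lra).
      apply (Rmult_lt_compat_l (2 * W + 1)) in HN; [|lra].
      replace ((2 * W + 1) * (eps / (2 * W + 1))) with (pos eps) in HN by (field; lra).
      assert (0 <= (/ 2) ^ k) by (apply pow_le; lra). nra. }
    exists N. intros n m Hn Hm. destruct (Nat.le_ge_cases n m) as [Hl|Hl].
    - rewrite <- Rabs_Ropp, Ropp_minus_distr. specialize (Hb n m Hl). specialize (Hsmall n Hn). lra.
    - specialize (Hb m n Hl). specialize (Hsmall m Hm). lra. }
  destruct Hc as [l Hl]. rewrite (is_lim_seq_unique a l Hl). simpl.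
  intros n. apply Rabs_le. split.
  - assert (Rbar_le (a n - 2 * W * (/ 2) ^ n) l); [|simpl in *; lra].
    apply (is_lim_seq_le_loc (fun _ => a n - 2 * W * (/ 2) ^ n) a); [|apply is_lim_seq_const| exact Hl].
    exists n. intros m Hm. specialize (Hb n m Hm). apply Rabs_le_between in Hb. lra.
  - assert (Rbar_le l (a n + 2 * W * (/ 2) ^ n)); [|simpl in *; lra].
    apply (is_lim_seq_le_loc a (fun _ => a n + 2 * W * (/ 2) ^ n)); [|exact Hl| apply is_lim_seq_const].
    exists n. intros m Hm. specialize (Hb n m Hm). apply Rabs_le_between in Hb. lra.
Qed.

Lemma lipschitz_of_geometric_approx (y : R -> R) (a : nat -> R -> R) (W : R -> R) K :
  (forall n t, Rabs (y t - a n t) <= W t * (/ 2) ^ n) ->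
  (forall n t s, Rabs (a n t - a n s) <= K * Rabs (t - s)) ->
  forall t s, Rabs (y t - y s) <= K * Rabs (t - s).
Proof.
  intros Ha Hl t s. apply (le_of_le_geometric _ _ (W t + W s)). intros n.
  specialize (Ha n t) as At. specialize (Ha n s) as As. specialize (Hl n t s).
  replace (y t - y s) with ((y t - a n t) + (a n t - a n s) - (y s - a n s)) by ring.
  unfold Rminus at 1. eapply Rle_trans; [apply Rabs_triang|]. rewrite Rabs_Ropp.
  eapply Rle_trans; [apply Rplus_le_compat_r, Rabs_triang|]. lra.
Qed.

Lemma integral_eq_of_geometric_approx (y x t W K : R) (a : nat -> R) (h : R -> R) (hn : nat -> R -> R) :
  0 <= t -> (forall s, continuous h s) -> (forall n s, continuous (hn n) s) ->
  (forall n, Rabs (y - a n) <= W * (/ 2) ^ n) ->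
  (forall n, a (S n) = x + RInt (hn n) 0 t) ->
  (forall n s, 0 <= s <= t -> Rabs (hn n s - h s) <= K * (/ 2) ^ n) ->
  y = x + RInt h 0 t.
Proof.
  intros Ht Hh Hhn Hya Ha Hk.
  apply Rminus_diag_uniq, Rabs_eq_0, Rle_antisym; [|apply Rabs_pos].
  apply (le_of_le_geometric _ 0 (W + t * K)). intros n.
  specialize (Hya (S n)). rewrite Ha in Hya.
  assert (Hi := RInt_diff_le_const (hn n) h t (K * (/ 2) ^ n) Ht (Hhn n) Hh (Hk n)).
  replace (y - (x + RInt h 0 t)) with
    ((y - (x + RInt (hn n) 0 t)) + (RInt (hn n) 0 t - RInt h 0 t)) by ring.
  eapply Rle_trans; [apply Rabs_triang|]. simpl pow in Hya.
  assert (0 <= W * (/ 2) ^ n) by (pose proof (Rabs_pos (y - (x + RInt (hn n) 0 t))); nra).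
  nra.
Qed.

(** * Picard iteration for a bounded Lipschitz planar field *)

Lemma Rmax0_lipschitz t s : Rabs (Rmax 0 t - Rmax 0 s) <= Rabs (t - s).
Proof.
  unfold Rmax; destruct (Rle_dec 0 t), (Rle_dec 0 s); unfold Rabs; repeat destruct Rcase_abs; lra.
Qed.

Definition lipschitz_bounded (F : R -> R -> R) L B :=
  (forall a b c d, Rabs (F a b - F c d) <= L * (Rabs (a - c) + Rabs (b - d))) /\
  (forall a b, Rabs (F a b) <= B).

Lemma lipschitz_bounded_continuous F L B (u v : R -> R) :
  lipschitz_bounded F L B -> (forall x, continuous u x) -> (forall x, continuous v x) ->
  forall x, continuous (fun s => F (u s) (v s)) x.
Proof. intros HF Hu Hv x. apply (continuous_lipschitz2 F L); [apply HF| auto| auto]. Qed.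

Lemma primitive_Rmax_lipschitz (x0 B : R) (h : R -> R) :
  (forall x, continuous h x) -> (forall x, Rabs (h x) <= B) ->
  forall t s, Rabs (x0 + RInt h 0 (Rmax 0 t) - (x0 + RInt h 0 (Rmax 0 s))) <= B * Rabs (t - s).
Proof.
  intros Hc Hb t s. rewrite Rminus_plus_l_l.
  eapply Rle_trans; [apply RInt_primitive_lipschitz; auto|].
  apply Rmult_le_compat_l; [|apply Rmax0_lipschitz].
  pose proof (Hb 0). pose proof (Rabs_pos (h 0)). lra.
Qed.

Section Picard.

Variables (F1 F2 : R -> R -> R) (x1 x2 L B : R).
Hypothesis HL : 0 < L.
Hypothesis HF1 : lipschitz_bounded F1 L B.
Hypothesis HF2 : lipschitz_bounded F2 L B.

(* The iterates are frozen at their value at 0 for negative times, so that they are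
   globally Lipschitz. *)
Fixpoint picard_iter (n : nat) (t : R) : R * R :=
  match n with
  | O => (x1, x2)
  | S n =>
      (x1 + RInt (fun s => F1 (fst (picard_iter n s)) (snd (picard_iter n s))) 0 (Rmax 0 t),
       x2 + RInt (fun s => F2 (fst (picard_iter n s)) (snd (picard_iter n s))) 0 (Rmax 0 t))
  end.

Definition picard_iter1 n t := fst (picard_iter n t).
Definition picard_iter2 n t := snd (picard_iter n t).

Lemma picard_iter1_S n t :
  picard_iter1 (S n) t = x1 + RInt (fun s => F1 (picard_iter1 n s) (picard_iter2 n s)) 0 (Rmax 0 t).
Proof. reflexivity. Qed.

Lemma picard_iter2_S n t :
  picard_iter2 (S n) t = x2 + RInt (fun s => F2 (picard_iter1 n s) (picard_iter2 n s)) 0 (Rmax 0 t).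
Proof. reflexivity. Qed.

Lemma picard_iter_Rmax n t : picard_iter n t = picard_iter n (Rmax 0 t).
Proof.
  destruct n; [reflexivity|]. simpl.
  replace (Rmax 0 (Rmax 0 t)) with (Rmax 0 t) by (unfold Rmax; repeat destruct Rle_dec; lra).
  reflexivity.
Qed.

Lemma picard_bound_nonneg : 0 <= B.
Proof. pose proof (proj2 HF1 0 0). pose proof (Rabs_pos (F1 0 0)). lra. Qed.

Lemma picard_iter_lipschitz n : forall t s,
  Rabs (picard_iter1 n t - picard_iter1 n s) <= B * Rabs (t - s) /\
  Rabs (picard_iter2 n t - picard_iter2 n s) <= B * Rabs (t - s).
Proof.
  pose proof picard_bound_nonneg as HB.
  induction n; intros t s.
  - unfold picard_iter1, picard_iter2; simpl. rewrite !Rminus_eq_0, !Rabs_R0.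
    split; apply Rmult_le_pos; auto; apply Rabs_pos.
  - assert (Hc1 : forall x, continuous (picard_iter1 n) x)
      by (intros x; apply (lipschitz_continuous _ B); intros; apply IHn).
    assert (Hc2 : forall x, continuous (picard_iter2 n) x)
      by (intros x; apply (lipschitz_continuous _ B); intros; apply IHn).
    rewrite !picard_iter1_S, !picard_iter2_S.
    split; apply primitive_Rmax_lipschitz.
    + apply (lipschitz_bounded_continuous F1 L B); auto.
    + intros; apply HF1.
    + apply (lipschitz_bounded_continuous F2 L B); auto.
    + intros; apply HF2.
Qed.

Lemma picard_iter_continuous n x : continuous (picard_iter1 n) x /\ continuous (picard_iter2 n) x.
Proof. split; apply (lipschitz_continuous _ B); intros; apply picard_iter_lipschitz. Qed.

Lemma picard_rhs_continuous n x :
  continuous (fun s => F1 (picard_iter1 n s) (picard_iter2 n s)) x /\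
  continuous (fun s => F2 (picard_iter1 n s) (picard_iter2 n s)) x.
Proof.
  split; [apply (lipschitz_bounded_continuous F1 L B)| apply (lipschitz_bounded_continuous F2 L B)];
    auto; intros; apply picard_iter_continuous.
Qed.

Definition picard_step n t :=
  Rabs (picard_iter1 (S n) t - picard_iter1 n t) + Rabs (picard_iter2 (S n) t - picard_iter2 n t).

(* Each step of the iteration halves the weighted sup norm with weight exp (- 4 L t). *)
Lemma picard_step_bound n t : 0 <= t ->
  picard_step n t <= B / (2 * L) * (/ 2) ^ n * exp (4 * L * t).
Proof.
  pose proof picard_bound_nonneg as HB.
  revert t. induction n; intros t Ht; unfold picard_step.
  - rewrite !picard_iter1_S, !picard_iter2_S. unfold picard_iter1, picard_iter2. simpl.
    rewrite (Rmax_right 0 t) by lra.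
    rewrite !RInt_const, !Rplus_minus_l, !Rminus_0_r. unfold scal; simpl; unfold mult; simpl.
    rewrite !Rabs_mult, (Rabs_right t) by lra.
    pose proof (proj2 HF1 x1 x2). pose proof (proj2 HF2 x1 x2).
    pose proof (Rmult_le_compat_l t _ _ Ht H). pose proof (Rmult_le_compat_l t _ _ Ht H0).
    rewrite Rmult_1_r.
    assert (t * B + t * B <= B / (2 * L) * exp (4 * L * t)); [|lra].
    pose proof (exp_ineq1_le (4 * L * t)).
    apply Rle_trans with (B / (2 * L) * (4 * L * t)); [right; field; lra|].
    apply Rmult_le_compat_l; [apply Rdiv_le_0_compat|]; lra.
  - set (C := B / (2 * L) * (/ 2) ^ n).
    assert (HC : 0 <= C) by (apply Rmult_le_pos; [apply Rdiv_le_0_compat| apply pow_le]; lra).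
    assert (Hrhs : forall F, lipschitz_bounded F L B -> forall s, 0 <= s <= t ->
      Rabs (F (picard_iter1 (S n) s) (picard_iter2 (S n) s) - F (picard_iter1 n s) (picard_iter2 n s))
        <= L * C * exp (4 * L * s)).
    { intros F HF s Hs. eapply Rle_trans; [apply HF|].
      rewrite Rmult_assoc. apply Rmult_le_compat_l; [lra|]. apply IHn. lra. }
    rewrite (picard_iter1_S (S n)), (picard_iter1_S n), (picard_iter2_S (S n)), (picard_iter2_S n).
    rewrite !Rminus_plus_l_l, (Rmax_right 0 t) by lra.
    pose proof (RInt_diff_le_exp (fun s => F1 (picard_iter1 (S n) s) (picard_iter2 (S n) s))
      (fun s => F1 (picard_iter1 n s) (picard_iter2 n s)) t (L * C) (4 * L) Ht ltac:(lra)
      (fun x => proj1 (picard_rhs_continuous (S n) x)) (fun x => proj1 (picard_rhs_continuous n x))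
      (Hrhs F1 HF1)).
    pose proof (RInt_diff_le_exp (fun s => F2 (picard_iter1 (S n) s) (picard_iter2 (S n) s))
      (fun s => F2 (picard_iter1 n s) (picard_iter2 n s)) t (L * C) (4 * L) Ht ltac:(lra)
      (fun x => proj2 (picard_rhs_continuous (S n) x)) (fun x => proj2 (picard_rhs_continuous n x))
      (Hrhs F2 HF2)).
    replace (B / (2 * L) * (/ 2) ^ S n) with (C / 2) by (unfold C; simpl; field; lra).
    assert (L * C * (exp (4 * L * t) - 1) / (4 * L) = C / 4 * exp (4 * L * t) - C / 4)
      by (field; lra).
    lra.
Qed.

Definition picard_weight t := B / (2 * L) * exp (4 * L * Rmax 0 t).

Lemma picard_weight_le s t : 0 <= s <= t -> picard_weight s <= picard_weight t.
Proof.
  intros Hs. unfold picard_weight. rewrite !Rmax_right by lra.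
  apply Rmult_le_compat_l; [apply Rdiv_le_0_compat; [apply picard_bound_nonneg| lra]|].
  destruct (Req_dec s t) as [->|]; [lra|]. left; apply exp_increasing; nra.
Qed.

Definition picard_sol1 t := real (Lim_seq (fun n => picard_iter1 n t)).
Definition picard_sol2 t := real (Lim_seq (fun n => picard_iter2 n t)).

Lemma picard_sol_approx n t :
  Rabs (picard_sol1 t - picard_iter1 n t) <= 2 * picard_weight t * (/ 2) ^ n /\
  Rabs (picard_sol2 t - picard_iter2 n t) <= 2 * picard_weight t * (/ 2) ^ n.
Proof.
  assert (Hk : forall k, picard_step k t <= picard_weight t * (/ 2) ^ k).
  { intros k. unfold picard_step, picard_weight, picard_iter1, picard_iter2.
    rewrite (picard_iter_Rmax (S k) t), (picard_iter_Rmax k t).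
    pose proof (picard_step_bound k (Rmax 0 t) (Rmax_l 0 t)) as Hb.
    unfold picard_step, picard_iter1, picard_iter2 in Hb. lra. }
  pose proof (fun k => Rabs_pos (picard_iter1 (S k) t - picard_iter1 k t)) as P1.
  pose proof (fun k => Rabs_pos (picard_iter2 (S k) t - picard_iter2 k t)) as P2.
  unfold picard_step in Hk. split.
  - apply (geometric_limit_bound (fun n => picard_iter1 n t)).
    intros k. specialize (Hk k). specialize (P2 k). lra.
  - apply (geometric_limit_bound (fun n => picard_iter2 n t)).
    intros k. specialize (Hk k). specialize (P1 k). lra.
Qed.

Lemma picard_sol_continuous x : continuous picard_sol1 x /\ continuous picard_sol2 x.
Proof.
  split; apply (lipschitz_continuous _ B).
  - apply (lipschitz_of_geometric_approx _ picard_iter1 (fun t => 2 * picard_weight t));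
      intros; [apply picard_sol_approx| apply picard_iter_lipschitz].
  - apply (lipschitz_of_geometric_approx _ picard_iter2 (fun t => 2 * picard_weight t));
      intros; [apply picard_sol_approx| apply picard_iter_lipschitz].
Qed.

Lemma picard_sol_integral t : 0 <= t ->
  picard_sol1 t = x1 + RInt (fun s => F1 (picard_sol1 s) (picard_sol2 s)) 0 t /\
  picard_sol2 t = x2 + RInt (fun s => F2 (picard_sol1 s) (picard_sol2 s)) 0 t.
Proof.
  intros Ht.
  assert (Hcont : forall x, continuous picard_sol1 x) by apply picard_sol_continuous.
  assert (Hcont2 : forall x, continuous picard_sol2 x) by apply picard_sol_continuous.
  assert (Hrhs : forall F, lipschitz_bounded F L B -> forall n s, 0 <= s <= t ->
    Rabs (F (picard_iter1 n s) (picard_iter2 n s) - F (picard_sol1 s) (picard_sol2 s))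
      <= L * (4 * picard_weight t) * (/ 2) ^ n).
  { intros F HF n s Hs. eapply Rle_trans; [apply HF|].
    destruct (picard_sol_approx n s) as [A1 A2].
    rewrite <- Rabs_Ropp, Ropp_minus_distr in A1, A2.
    pose proof (picard_weight_le s t Hs). assert (0 <= (/ 2) ^ n) by (apply pow_le; lra).
    rewrite Rmult_assoc. apply Rmult_le_compat_l; [lra| nra]. }
  split.
  - apply (integral_eq_of_geometric_approx _ _ _ (2 * picard_weight t) (L * (4 * picard_weight t))
      (fun n => picard_iter1 n t) _ (fun n s => F1 (picard_iter1 n s) (picard_iter2 n s)) Ht);
      auto.
    + apply (lipschitz_bounded_continuous F1 L B); auto.
    + intros n s. apply picard_rhs_continuous.
    + intros n. apply picard_sol_approx.
    + intros n. rewrite picard_iter1_S, Rmax_right by lra. reflexivity.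
  - apply (integral_eq_of_geometric_approx _ _ _ (2 * picard_weight t) (L * (4 * picard_weight t))
      (fun n => picard_iter2 n t) _ (fun n s => F2 (picard_iter1 n s) (picard_iter2 n s)) Ht);
      auto.
    + apply (lipschitz_bounded_continuous F2 L B); auto.
    + intros n s. apply picard_rhs_continuous.
    + intros n. apply picard_sol_approx.
    + intros n. rewrite picard_iter2_S, Rmax_right by lra. reflexivity.
Qed.

Theorem picard_global_existence :
  exists y1 y2 : R -> R, y1 0 = x1 /\ y2 0 = x2 /\
    (forall x, continuous y1 x /\ continuous y2 x) /\
    forall t, 0 < t ->
      derivable_pt_lim y1 t (F1 (y1 t) (y2 t)) /\ derivable_pt_lim y2 t (F2 (y1 t) (y2 t)).
Proof.
  exists picard_sol1, picard_sol2.
  destruct (picard_sol_integral 0 (Rle_refl 0)) as [E1 E2].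
  rewrite RInt_point, Rplus_0_r in E1, E2.
  split; [exact E1|]. split; [exact E2|]. split; [exact picard_sol_continuous|].
  intros t Ht.
  assert (Hnear : forall u, Rabs (u - t) < t -> 0 <= u)
    by (intros u Hu; apply Rabs_lt_between in Hu; lra).
  split.
  - apply (derivable_pt_lim_ext_near
      (fun u => x1 + RInt (fun s => F1 (picard_sol1 s) (picard_sol2 s)) 0 u)).
    + exists t. split; [exact Ht|]. intros u Hu. symmetry. apply picard_sol_integral, Hnear, Hu.
    + apply (derivable_pt_lim_RInt (fun s => F1 (picard_sol1 s) (picard_sol2 s))).
      apply (lipschitz_bounded_continuous _ L B); auto; apply picard_sol_continuous.
  - apply (derivable_pt_lim_ext_near
      (fun u => x2 + RInt (fun s => F2 (picard_sol1 s) (picard_sol2 s)) 0 u)).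
    + exists t. split; [exact Ht|]. intros u Hu. symmetry. apply picard_sol_integral, Hnear, Hu.
    + apply (derivable_pt_lim_RInt (fun s => F2 (picard_sol1 s) (picard_sol2 s))).
      apply (lipschitz_bounded_continuous _ L B); auto; apply picard_sol_continuous.
Qed.

End Picard.

(** * The conservation law *)

Lemma pow2_gt_0 x : x <> 0 -> 0 < x ^ 2.
Proof. intros H. simpl. rewrite Rmult_1_r. exact (Rsqr_pos_lt x H). Qed.

Lemma derivable_pt_lim_sqr (f : R -> R) x l :
  derivable_pt_lim f x l -> derivable_pt_lim (fun s => f s ^ 2) x (2 * f x * l).
Proof.
  intros H. replace (2 * f x * l) with (INR 2 * f x ^ 1 * l) by (simpl; ring).
  apply (derivable_pt_lim_comp f (fun y => y ^ 2)); [exact H| apply derivable_pt_lim_pow].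
Qed.

Definition boxed_solution b g tau M R10 R20 (x1 x2 : R -> R) :=
  ode_on b g 0 tau x1 x2 /\ right_cont0 x1 /\ right_cont0 x2 /\ x1 0 = R10 /\ x2 0 = R20 /\
  forall t, 0 < t < tau -> Rabs (x1 t) <= M /\ Rabs (x2 t) <= M.

Lemma boxed_solution_mono b g tau M R10 R20 x1 x2 tau' M' :
  boxed_solution b g tau M R10 R20 x1 x2 -> tau' <= tau -> M <= M' ->
  boxed_solution b g tau' M' R10 R20 x1 x2.
Proof.
  intros [Ho [H1 [H2 [E1 [E2 Hb]]]]] Ht HM. repeat split; auto.
  - apply Ho. lra.
  - apply Ho. lra.
  - destruct (Hb t ltac:(lra)). lra.
  - destruct (Hb t ltac:(lra)). lra.
Qed.

Section Conservation.

Variables b g : R.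
Hypothesis hg : 1 < g.

Lemma R2_sqr_derivative a c x1 x2 : ode_on b g a c x1 x2 -> forall t, a < t < c ->
  derivable_pt_lim (fun s => x2 s ^ 2) t (- (g + 1) * x1 t * x2 t ^ 2).
Proof.
  intros Ho t Ht. replace (- (g + 1) * x1 t * x2 t ^ 2) with (2 * x2 t * (- ((g + 1) / 2) * x1 t * x2 t))
    by field.
  apply derivable_pt_lim_sqr, Ho, Ht.
Qed.

(* [R2 ^ 2] grows or decays at most exponentially, so it cannot leave or reach 0. *)
Lemma R2_stays_zero tau M R10 x1 x2 :
  boxed_solution b g tau M R10 0 x1 x2 -> forall t, 0 < t < tau -> x2 t = 0.
Proof.
  intros [Ho [H1 [H2 [E1 [E2 Hb]]]]] t Ht.
  assert (Hq : x2 t ^ 2 <= x2 0 ^ 2 * exp ((g + 1) * M * t)).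
  { apply (gronwall_upper (fun s => x2 s ^ 2) (fun s => - (g + 1) * x1 s * x2 s ^ 2) tau);
      [apply (R2_sqr_derivative 0 tau x1 x2 Ho)| |apply right_cont0_sqr, H2| exact Ht].
    intros s Hs. destruct (Hb s Hs) as [B1 _]. apply Rabs_le_between in B1.
    pose proof (pow2_ge_0 (x2 s)).
    assert (0 <= (g + 1) * (M + x1 s) * x2 s ^ 2) by (apply Rmult_le_pos; [apply Rmult_le_pos|]; lra).
    nra. }
  rewrite E2 in Hq. simpl in Hq. rewrite !Rmult_0_l in Hq. nra.
Qed.

Lemma R2_stays_nonzero tau M R10 R20 x1 x2 : R20 <> 0 ->
  boxed_solution b g tau M R10 R20 x1 x2 -> forall t, 0 < t < tau -> x2 t <> 0.
Proof.
  intros Hn [Ho [H1 [H2 [E1 [E2 Hb]]]]] t Ht Hz.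
  assert (Hq : x2 0 ^ 2 * exp (- ((g + 1) * M) * t) <= x2 t ^ 2).
  { apply (gronwall_lower (fun s => x2 s ^ 2) (fun s => - (g + 1) * x1 s * x2 s ^ 2) tau);
      [apply (R2_sqr_derivative 0 tau x1 x2 Ho)| |apply right_cont0_sqr, H2| exact Ht].
    intros s Hs. destruct (Hb s Hs) as [B1 _]. apply Rabs_le_between in B1.
    pose proof (pow2_ge_0 (x2 s)).
    assert (0 <= (g + 1) * (M - x1 s) * x2 s ^ 2) by (apply Rmult_le_pos; [apply Rmult_le_pos|]; lra).
    nra. }
  rewrite E2, Hz in Hq. pose proof (pow2_gt_0 R20 Hn).
  pose proof (exp_pos (- ((g + 1) * M) * t)). simpl in Hq. nra.
Qed.

Lemma R2_sqr_le_initial tau x1 x2 : ode_on b g 0 tau x1 x2 -> right_cont0 x2 ->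
  (forall t, 0 < t < tau -> 0 <= x1 t) -> forall t, 0 < t < tau -> x2 t ^ 2 <= x2 0 ^ 2.
Proof.
  intros Ho H2 Hp.
  apply (derivable_nonpos_le_initial (fun s => x2 s ^ 2) (fun s => - (g + 1) * x1 s * x2 s ^ 2) tau);
    [apply (R2_sqr_derivative 0 tau x1 x2 Ho)| |apply right_cont0_sqr, H2].
  intros s Hs. specialize (Hp s Hs). pose proof (pow2_ge_0 (x2 s)).
  assert (0 <= (g + 1) * x1 s * x2 s ^ 2) by (apply Rmult_le_pos; [apply Rmult_le_pos|]; lra).
  lra.
Qed.

Lemma invariant_exp_ln r1 r2 : r2 <> 0 ->
  invariant b g r1 r2 =
  (r1 ^ 2 + (2 * b / (g - 1)) * r2 ^ 2) * exp ((- (4 / (g + 1)) / 2) * ln (r2 ^ 2)).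
Proof.
  intros H. unfold invariant, Rpower. f_equal. f_equal.
  rewrite <- (pow2_abs r2). simpl. rewrite Rmult_1_r, ln_mult by (apply Rabs_pos_lt; auto). field. lra.
Qed.

(* E' = -2 R1 E and Q' = -(g+1) R1 Q, so E Q^(-2/(g+1)) has zero derivative. *)
Lemma invariant_derivative_zero a c x1 x2 : ode_on b g a c x1 x2 -> forall t, a < t < c -> x2 t <> 0 ->
  derivable_pt_lim
    (fun s => (x1 s ^ 2 + (2 * b / (g - 1)) * x2 s ^ 2) * exp ((- (4 / (g + 1)) / 2) * ln (x2 s ^ 2)))
    t 0.
Proof.
  intros Ho t Ht Hn. destruct (Ho t Ht) as [D1 D2].
  apply is_derive_Reals in D1, D2. apply is_derive_Reals.
  auto_derive.
  - repeat split; try (eexists; eassumption). apply pow2_gt_0, Hn.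
  - change (fun s => x1 s) with x1; change (fun s => x2 s) with x2.
    rewrite (is_derive_unique _ _ _ D1), (is_derive_unique _ _ _ D2).
    field. repeat split; lra || auto.
Qed.

Lemma invariant_conserved a c x1 x2 : ode_on b g a c x1 x2 -> (forall t, a < t < c -> x2 t <> 0) ->
  forall s t, a < s < c -> a < t < c -> invariant b g (x1 s) (x2 s) = invariant b g (x1 t) (x2 t).
Proof.
  intros Ho Hn. apply derivable_zero_constant. intros t Ht.
  apply (derivable_pt_lim_ext_near (fun s =>
    (x1 s ^ 2 + (2 * b / (g - 1)) * x2 s ^ 2) * exp ((- (4 / (g + 1)) / 2) * ln (x2 s ^ 2)))).
  - exists (Rmin (t - a) (c - t)). split; [apply Rmin_pos; lra|].
    intros s Hs. pose proof (Rmin_l (t - a) (c - t)). pose proof (Rmin_r (t - a) (c - t)).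
    apply Rabs_lt_between in Hs. symmetry. apply invariant_exp_ln, Hn. lra.
  - apply (invariant_derivative_zero a c); auto.
Qed.

Lemma right_cont0_invariant x1 x2 : right_cont0 x1 -> right_cont0 x2 -> x2 0 <> 0 ->
  right_cont0 (fun t => invariant b g (x1 t) (x2 t)).
Proof.
  intros H1 H2 Hn. unfold invariant.
  apply right_cont0_mult; [apply right_cont0_plus|].
  - apply right_cont0_sqr, H1.
  - apply (right_cont0_comp (fun t => x2 t ^ 2) (fun y => 2 * b / (g - 1) * y));
      [apply right_cont0_sqr, H2|].
    apply (continuous_mult (K := R_AbsRing)); [apply continuous_const| apply continuous_id].
  - apply (right_cont0_comp x2 (fun y => Rpower (Rabs y) _)); [exact H2|].
    apply (continuous_comp Rabs (fun y => Rpower y _)); [apply continuous_Rabs_comp, continuous_id|].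
    apply (derivable_pt_lim_continuous _ _ _ (derivable_pt_lim_power _ _ (Rabs_pos_lt _ Hn))).
Qed.

Lemma invariant_conserved_initial tau M R10 R20 x1 x2 : R20 <> 0 ->
  boxed_solution b g tau M R10 R20 x1 x2 ->
  forall t, 0 < t < tau -> invariant b g (x1 t) (x2 t) = invariant b g R10 R20.
Proof.
  intros Hn Hs. pose proof (R2_stays_nonzero tau M R10 R20 x1 x2 Hn Hs) as Hnz.
  destruct Hs as [Ho [H1 [H2 [E1 [E2 Hb]]]]]. rewrite <- E1, <- E2.
  apply (right_cont0_constant_extends (fun t => invariant b g (x1 t) (x2 t)) tau).
  - apply right_cont0_invariant; auto. congruence.
  - apply (invariant_conserved 0 tau x1 x2 Ho Hnz).
Qed.

Lemma energy_eq_invariant r1 r2 : r2 <> 0 ->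
  r1 ^ 2 + (2 * b / (g - 1)) * r2 ^ 2 = invariant b g r1 r2 * Rpower (Rabs r2) (4 / (g + 1)).
Proof.
  intros H. unfold invariant. rewrite Rmult_assoc, <- Rpower_plus, Rplus_opp_l, Rpower_O; [ring|].
  apply Rabs_pos_lt, H.
Qed.

End Conservation.

(** * A priori bounds in the good cases *)

Lemma Rpower_gt_0 y q : 0 < Rpower y q.
Proof. apply exp_pos. Qed.

Lemma Rpower_root Y q : 0 < Y -> q <> 0 -> Rpower (Rpower Y q) (1 / q) = Y.
Proof.
  intros HY Hq. rewrite Rpower_mult. replace (q * (1 / q)) with 1 by (field; auto).
  apply Rpower_1, HY.
Qed.

Lemma sqr_le_Rpower_cancel Y p k C : 0 < Y -> k * Y ^ 2 <= C * Rpower Y p -> k * Rpower Y (2 - p) <= C.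
Proof.
  intros HY H. replace (Y ^ 2) with (Rpower Y (INR 2)) in H by (apply Rpower_pow, HY).
  simpl INR in H. replace (1 + 1) with 2 in H by ring.
  replace (2 - p) with (2 + - p) by ring. rewrite Rpower_plus.
  pose proof (Rpower_gt_0 Y (- p)).
  apply Rmult_le_compat_r with (r := Rpower Y (- p)) in H; [|lra].
  rewrite (Rmult_assoc C), <- Rpower_plus, Rplus_opp_r, Rpower_O in H by exact HY. lra.
Qed.

Lemma sqr_le_Rpower_upper Y p k C : 0 < Y -> p < 2 -> 0 < k -> k * Y ^ 2 <= C * Rpower Y p ->
  Y <= Rpower (C / k) (1 / (2 - p)).
Proof.
  intros HY Hp Hk H. apply sqr_le_Rpower_cancel in H; [|exact HY].
  pose proof (Rpower_gt_0 Y (2 - p)).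
  assert (Rpower Y (2 - p) <= C / k).
  { apply Rmult_le_reg_l with k; [exact Hk|]. replace (k * (C / k)) with C by (field; lra). lra. }
  rewrite <- (Rpower_root Y (2 - p)) at 1 by (auto; lra).
  apply Rle_Rpower_l; [left; apply Rdiv_lt_0_compat; lra| lra].
Qed.

Lemma sqr_le_Rpower_lower Y p k C : 0 < Y -> p < 2 -> k < 0 -> C < 0 -> k * Y ^ 2 <= C * Rpower Y p ->
  Rpower (C / k) (1 / (2 - p)) <= Y.
Proof.
  intros HY Hp Hk HC H. apply sqr_le_Rpower_cancel in H; [|exact HY].
  pose proof (Rpower_gt_0 Y (2 - p)).
  assert (C / k <= Rpower Y (2 - p)).
  { apply Rmult_le_reg_l with (- k); [lra|]. replace (- k * (C / k)) with (- C) by (field; lra). lra. }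
  assert (0 < C / k)
    by (replace (C / k) with ((- C) / (- k)) by (field; lra); apply Rdiv_lt_0_compat; lra).
  rewrite <- (Rpower_root Y (2 - p)) by (auto; lra).
  apply Rle_Rpower_l; [left; apply Rdiv_lt_0_compat; lra| lra].
Qed.

Lemma Rabs_le_of_pow2_le x y : x ^ 2 <= y ^ 2 -> Rabs x <= Rabs y.
Proof. intros H. apply Rsqr_le_abs_0. unfold Rsqr. simpl in H. lra. Qed.

Lemma abs_le_1_plus_sqr x : Rabs x <= 1 + x ^ 2.
Proof. unfold Rabs; destruct Rcase_abs; nra. Qed.

Definition a_priori_bound b g R10 R20 B0 :=
  forall tau M x1 x2, boxed_solution b g tau M R10 R20 x1 x2 ->
  forall t, 0 < t < tau -> Rabs (x1 t) <= B0 /\ Rabs (x2 t) <= B0.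

Section APrioriBounds.

Variables b g : R.
Hypothesis hg : 1 < g.

Let k := 2 * b / (g - 1).
Let p := 4 / (g + 1).

Lemma invariant_exponent_bounds : 0 < p < 2.
Proof.
  unfold p. split; [apply Rdiv_lt_0_compat; lra|].
  apply Rmult_lt_reg_r with (g + 1); [lra|]. unfold Rdiv. rewrite Rmult_assoc, Rinv_l by lra. lra.
Qed.

Lemma energy_along_solution tau M R10 R20 x1 x2 t : R20 <> 0 ->
  boxed_solution b g tau M R10 R20 x1 x2 -> 0 < t < tau ->
  0 < Rabs (x2 t) /\
  x1 t ^ 2 + k * Rabs (x2 t) ^ 2 = invariant b g R10 R20 * Rpower (Rabs (x2 t)) p.
Proof.
  intros Hn Hs Ht. pose proof (R2_stays_nonzero b g hg tau M R10 R20 x1 x2 Hn Hs t Ht) as Hnz.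
  split; [apply Rabs_pos_lt, Hnz|].
  rewrite pow2_abs, <- (invariant_conserved_initial b g hg tau M R10 R20 x1 x2 Hn Hs t Ht).
  apply energy_eq_invariant, Hnz.
Qed.

(* For b > 0 both terms of the energy are nonnegative, so the conservation law bounds |R2|. *)
Lemma a_priori_bound_b_pos R10 R20 : 0 < b -> R20 <> 0 -> exists B0, a_priori_bound b g R10 R20 B0.
Proof.
  intros Hb Hn.
  set (C0 := invariant b g R10 R20).
  assert (Hk : 0 < k) by (unfold k; apply Rdiv_lt_0_compat; lra).
  destruct invariant_exponent_bounds as [Hp0 Hp2].
  assert (HC : 0 < C0).
  { unfold C0, invariant. apply Rmult_lt_0_compat; [|apply Rpower_gt_0]. fold k.
    pose proof (pow2_gt_0 R20 Hn). pose proof (pow2_ge_0 R10). nra. }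
  set (Y0 := Rpower (C0 / k) (1 / (2 - p))).
  assert (HY0 : 0 < Y0) by apply Rpower_gt_0.
  exists (Y0 + 1 + C0 * Rpower Y0 p). intros tau M x1 x2 Hs t Ht.
  destruct (energy_along_solution tau M R10 R20 x1 x2 t Hn Hs Ht) as [HY HE]. fold C0 in HE.
  assert (HYb : Rabs (x2 t) <= Y0).
  { apply sqr_le_Rpower_upper; auto. pose proof (pow2_ge_0 (x1 t)). lra. }
  assert (Rpower (Rabs (x2 t)) p <= Rpower Y0 p) by (apply Rle_Rpower_l; lra).
  assert (x1 t ^ 2 <= C0 * Rpower Y0 p).
  { assert (0 <= k * Rabs (x2 t) ^ 2) by (apply Rmult_le_pos; [lra| apply pow2_ge_0]).
    assert (C0 * Rpower (Rabs (x2 t)) p <= C0 * Rpower Y0 p) by (apply Rmult_le_compat_l; lra). lra. }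
  pose proof (abs_le_1_plus_sqr (x1 t)). pose proof (Rpower_gt_0 Y0 p).
  split; nra.
Qed.

(* When [b R2^2] vanishes, Gronwall applied to the squared distance to R10 / (1 + R10 t) shows that
   R1 is this explicit solution of R1' = -R1^2. *)
Lemma riccati_explicit tau M R10 R20 x1 x2 : 0 <= R10 -> boxed_solution b g tau M R10 R20 x1 x2 ->
  (forall t, 0 < t < tau -> b * x2 t ^ 2 = 0) -> forall t, 0 < t < tau -> 0 <= x1 t <= R10.
Proof.
  intros HR Hs Hz. destruct Hs as [Ho [H1 [H2 [E1 [E2 Hb]]]]].
  set (r := fun t => R10 / (1 + R10 * Rmax 0 t)).
  assert (Hr0 : r 0 = R10) by (unfold r; rewrite Rmax_left by lra; field; lra).
  assert (Hrpos : forall t, 0 <= t -> 0 <= r t <= R10).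
  { intros t Ht. unfold r. rewrite Rmax_right by lra. assert (1 <= 1 + R10 * t) by nra. split.
    - apply Rdiv_le_0_compat; lra.
    - apply Rmult_le_reg_r with (1 + R10 * t); [lra|].
      unfold Rdiv. rewrite Rmult_assoc, Rinv_l by lra. nra. }
  assert (Hrd : forall t, 0 < t -> derivable_pt_lim r t (- r t ^ 2)).
  { intros t Ht. apply (derivable_pt_lim_ext_near (fun s => R10 / (1 + R10 * s))).
    - exists t. split; [exact Ht|]. intros s Hs. apply Rabs_lt_between in Hs.
      unfold r. rewrite Rmax_right by lra. reflexivity.
    - apply is_derive_Reals. assert (1 <= 1 + R10 * t) by nra. auto_derive; [lra|].
      unfold r. rewrite Rmax_right by lra. field. lra. }
  assert (Hrc : right_cont0 r).
  { apply continuous_right_cont0, (continuous_comp (fun t => Rmax 0 t) (fun u => R10 / (1 + R10 * u))).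
    - apply (lipschitz_continuous _ 1). intros; rewrite Rmult_1_l; apply Rmax0_lipschitz.
    - rewrite Rmax_left by lra.
      apply (derivable_pt_lim_continuous _ _ (- R10 * R10 / (1 + R10 * 0) ^ 2)).
      apply is_derive_Reals. auto_derive; rewrite Rmult_0_r; [lra| field; lra]. }
  assert (HD : forall t, 0 < t < tau -> (x1 t - r t) ^ 2 <= (x1 0 - r 0) ^ 2 * exp (2 * M * t)).
  { apply (gronwall_upper (fun t => (x1 t - r t) ^ 2)
      (fun t => - 2 * (x1 t + r t) * (x1 t - r t) ^ 2) tau).
    - intros t Ht. destruct (Ho t Ht) as [D1 _]. rewrite (Hz t Ht), Rplus_0_r in D1.
      replace (- 2 * (x1 t + r t) * (x1 t - r t) ^ 2) with (2 * (x1 t - r t) * (- x1 t ^ 2 - - r t ^ 2))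
        by ring.
      apply (derivable_pt_lim_sqr (fun s => x1 s - r s)).
      apply derivable_pt_lim_minus; [exact D1| apply Hrd; lra].
    - intros t Ht. destruct (Hb t Ht) as [B1 _]. apply Rabs_le_between in B1.
      destruct (Hrpos t ltac:(lra)). pose proof (pow2_ge_0 (x1 t - r t)).
      assert (0 <= (M + x1 t) * (x1 t - r t) ^ 2) by (apply Rmult_le_pos; lra). nra.
    - apply right_cont0_sqr, right_cont0_plus, right_cont0_opp; assumption. }
  intros t Ht. specialize (HD t Ht).
  rewrite E1, Hr0, Rminus_eq_0 in HD. simpl in HD. rewrite !Rmult_0_l in HD.
  assert (x1 t = r t) by nra. rewrite H. apply Hrpos. lra.
Qed.

Lemma a_priori_bound_decoupled R10 R20 : 0 <= R10 -> b = 0 \/ R20 = 0 ->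
  a_priori_bound b g R10 R20 (Rabs R10 + Rabs R20).
Proof.
  intros HR Hc tau M x1 x2 Hs t Ht.
  assert (Hz : forall s, 0 < s < tau -> b * x2 s ^ 2 = 0).
  { intros s Hs'. destruct Hc as [-> | ->]; [ring|].
    rewrite (R2_stays_zero b g hg tau M R10 x1 x2 Hs s Hs'). ring. }
  pose proof (riccati_explicit tau M R10 R20 x1 x2 HR Hs Hz) as Hx.
  destruct Hs as [Ho [H1 [H2 [E1 [E2 Hb]]]]].
  assert (x2 t ^ 2 <= x2 0 ^ 2)
    by (apply (R2_sqr_le_initial b g hg tau x1 x2); auto; intros; apply Hx; auto).
  rewrite E2 in H. apply Rabs_le_of_pow2_le in H. destruct (Hx t Ht).
  rewrite (Rabs_pos_eq (x1 t)), (Rabs_pos_eq R10) by lra. pose proof (Rabs_pos R20). lra.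
Qed.

(* For b < 0 and nonnegative energy, R1 can never vanish: at a zero of R1 the energy identity
   would read k Y^2 = C Y^p with k < 0 <= C.  So R1 stays positive, hence decreasing, and R2^2 is
   nonincreasing. *)
Lemma a_priori_bound_b_neg R10 R20 : b < 0 -> 0 <= R10 -> R20 <> 0 ->
  0 <= R10 ^ 2 + k * R20 ^ 2 -> a_priori_bound b g R10 R20 (Rabs R10 + Rabs R20).
Proof.
  intros Hb HR Hn HE tau M x1 x2 Hs.
  assert (Hk : k < 0) by (unfold k, Rdiv; assert (0 < / (g - 1)) by (apply Rinv_0_lt_compat; lra); nra).
  assert (HR1 : 0 < R10).
  { destruct (Rle_lt_or_eq_dec _ _ HR) as [|<-]; [auto|]. pose proof (pow2_gt_0 R20 Hn).
    simpl in HE. nra. }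
  assert (HC : 0 <= invariant b g R10 R20).
  { unfold invariant. apply Rmult_le_pos; [exact HE| left; apply Rpower_gt_0]. }
  assert (Hx1nz : forall s, 0 < s < tau -> x1 s <> 0).
  { intros s Hs' Hz. destruct (energy_along_solution tau M R10 R20 x1 x2 s Hn Hs Hs') as [HY HEs].
    rewrite Hz in HEs. pose proof (pow_lt _ 2 HY). pose proof (Rpower_gt_0 (Rabs (x2 s)) p).
    assert (0 <= invariant b g R10 R20 * Rpower (Rabs (x2 s)) p) by (apply Rmult_le_pos; lra).
    simpl in HEs. nra. }
  destruct Hs as [Ho [H1 [H2 [E1 [E2 Hbox]]]]].
  assert (Hpos : forall s, 0 < s < tau -> 0 < x1 s).
  { apply positive_of_nonvanishing; [exact H1| lra| |exact Hx1nz].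
    intros x Hx. apply (derivable_pt_lim_continuous _ _ _ (proj1 (Ho x Hx))). }
  intros t Ht. split.
  - assert (x1 t <= x1 0).
    { apply (derivable_nonpos_le_initial x1 (fun s => - x1 s ^ 2 + b * x2 s ^ 2) tau); auto.
      - intros s Hs; apply Ho; auto.
      - intros s Hs. pose proof (pow2_ge_0 (x1 s)). pose proof (pow2_ge_0 (x2 s)). nra. }
    specialize (Hpos t Ht). pose proof (Rabs_pos R20).
    rewrite Rabs_right, (Rabs_right R10) by lra. lra.
  - assert (x2 t ^ 2 <= x2 0 ^ 2).
    { apply (R2_sqr_le_initial b g hg tau x1 x2); auto. intros; left; apply Hpos; auto. }
    rewrite E2 in H. apply Rabs_le_of_pow2_le in H. pose proof (Rabs_pos R10). lra.
Qed.

Lemma a_priori_bound_exists R10 R20 : global_condition b g R10 R20 ->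
  exists B0, a_priori_bound b g R10 R20 B0.
Proof.
  intros [[Hb HR]|[[Hb Hn]|[[Hb [HR HE]]|[Hz HR]]]].
  - destruct (Req_dec R20 0) as [Hz|Hn].
    { exists (Rabs R10 + Rabs R20). apply a_priori_bound_decoupled; auto; lra. }
    destruct (Rle_lt_or_eq_dec 0 b ltac:(lra)) as [Hbp|Hb0].
    + apply a_priori_bound_b_pos; auto.
    + exists (Rabs R10 + Rabs R20). apply a_priori_bound_decoupled; auto; lra.
  - apply a_priori_bound_b_pos; auto.
  - destruct (Req_dec R20 0) as [Hz|Hn].
    + exists (Rabs R10 + Rabs R20). apply a_priori_bound_decoupled; auto; lra.
    + exists (Rabs R10 + Rabs R20). apply a_priori_bound_b_neg; unfold k; auto; lra.
  - exists (Rabs R10 + Rabs R20). apply a_priori_bound_decoupled; auto; lra.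
Qed.

End APrioriBounds.

(** * Finite lifespan in the bad cases *)

(* [t - 1 / u t] is nonincreasing, starts at [- / u 0] and exceeds [t] while [u t < 0]. *)
Lemma riccati_lifespan (u du : R -> R) c :
  (forall t, 0 < t < c -> derivable_pt_lim u t (du t)) ->
  (forall t, 0 < t < c -> du t <= - u t ^ 2) -> right_cont0 u -> u 0 < 0 -> c <= - / u 0.
Proof.
  intros Hd Hb Hr H0.
  assert (Hneg : forall t, 0 < t < c -> u t < 0).
  { intros t Ht. assert (u t <= u 0); [|lra].
    apply (derivable_nonpos_le_initial u du c); auto.
    intros s Hs. specialize (Hb s Hs). pose proof (pow2_ge_0 (u s)). lra. }
  set (h := fun t => t + - / u t).
  assert (Hh : forall t, 0 < t < c -> derivable_pt_lim h t (1 + du t / u t ^ 2)).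
  { intros t Ht. specialize (Hneg t Ht). pose proof (Hd t Ht) as D. apply is_derive_Reals in D.
    apply is_derive_Reals. unfold h. auto_derive.
    - split; [eexists; exact D| split; [lra| exact I]].
    - change (fun x => u x) with u. rewrite (is_derive_unique _ _ _ D). field. lra. }
  assert (Hhn : forall t, 0 < t < c -> 1 + du t / u t ^ 2 <= 0).
  { intros t Ht. specialize (Hneg t Ht). specialize (Hb t Ht).
    assert (0 < u t ^ 2) by nra.
    assert (du t / u t ^ 2 <= -1); [|lra].
    apply Rmult_le_reg_r with (u t ^ 2); [lra|]. unfold Rdiv. rewrite Rmult_assoc, Rinv_l by lra. lra. }
  assert (Hrh : right_cont0 h).
  { apply right_cont0_plus; [apply continuous_right_cont0, continuous_id|].
    apply (right_cont0_comp u (fun x => - / x)); [exact Hr|].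
    apply (derivable_pt_lim_continuous _ _ (/ u 0 ^ 2)), is_derive_Reals.
    auto_derive; [lra| field; lra]. }
  destruct (Rle_dec c (- / u 0)) as [|Hn]; [auto| exfalso].
  assert (/ u 0 < 0) by (apply Rinv_lt_0_compat, H0).
  set (t := - / u 0). assert (Ht : 0 < t < c) by (unfold t; lra).
  pose proof (derivable_nonpos_le_initial h _ c Hh Hhn Hrh t Ht) as Hm. unfold h in Hm.
  specialize (Hneg t Ht). assert (/ u t < 0) by (apply Rinv_lt_0_compat; auto).
  fold t in Hm. lra.
Qed.

Lemma derivable_pt_lim_shift (u : R -> R) a s l :
  derivable_pt_lim u (a + s) l -> derivable_pt_lim (fun x => u (a + x)) s l.
Proof.
  intros H eps He. destruct (H eps He) as [d Hd]. exists d. intros h H1 H2.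
  replace (a + (s + h)) with (a + s + h) by ring. apply Hd; auto.
Qed.

Definition lifespan_bounded b g R10 R20 T0 :=
  forall tau M x1 x2, boxed_solution b g tau M R10 R20 x1 x2 -> tau <= T0.

Section Blowup.

Variables b g : R.
Hypothesis hg : 1 < g.

Lemma lifespan_bounded_R1_neg R10 R20 : R10 < 0 -> b <= 0 \/ R20 = 0 ->
  lifespan_bounded b g R10 R20 (- / R10).
Proof.
  intros HR Hc tau M x1 x2 Hs.
  assert (Hz : forall t, 0 < t < tau -> b * x2 t ^ 2 <= 0).
  { intros t Ht. destruct Hc as [Hb|Hz].
    - pose proof (pow2_ge_0 (x2 t)). nra.
    - subst. rewrite (R2_stays_zero b g hg tau M R10 x1 x2 Hs t Ht). simpl. lra. }
  destruct Hs as [Ho [H1 [H2 [E1 [E2 Hb]]]]]. rewrite <- E1.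
  apply (riccati_lifespan x1 (fun s => - x1 s ^ 2 + b * x2 s ^ 2) tau); [| |auto|lra].
  - intros t Ht; apply Ho, Ht.
  - intros t Ht; specialize (Hz t Ht); lra.
Qed.

(* For negative energy the conserved quantity keeps |R2| above a positive Y1, so
   R1' = -R1^2 + b R2^2 <= b Y1^2 < 0. *)
Lemma R1_derivative_le_neg_const R10 R20 : b < 0 ->
  R10 ^ 2 + (2 * b / (g - 1)) * R20 ^ 2 < 0 -> exists beta : R, 0 < beta /\
  (forall tau M x1 x2, boxed_solution b g tau M R10 R20 x1 x2 ->
   forall s, 0 < s < tau -> - x1 s ^ 2 + b * x2 s ^ 2 <= - beta).
Proof.
  intros Hb HE.
  set (k := 2 * b / (g - 1)) in *. set (p := 4 / (g + 1)).
  assert (Hk : k < 0) by (unfold k, Rdiv; assert (0 < / (g - 1)) by (apply Rinv_0_lt_compat; lra); nra).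
  assert (Hn : R20 <> 0) by (intros Hz; rewrite Hz in HE; pose proof (pow2_ge_0 R10); simpl in HE; lra).
  destruct (invariant_exponent_bounds g hg) as [Hp0 Hp2]. fold p in Hp0, Hp2.
  set (C0 := invariant b g R10 R20).
  assert (HC : C0 < 0).
  { unfold C0, invariant. fold k. pose proof (Rpower_gt_0 (Rabs R20) (- (4 / (g + 1)))). nra. }
  set (Y1 := Rpower (C0 / k) (1 / (2 - p))).
  assert (HY1 : 0 < Y1) by apply Rpower_gt_0.
  exists (- b * Y1 ^ 2). split; [pose proof (pow_lt _ 2 HY1); nra|].
  intros tau M x1 x2 Hs s Hs'.
  destruct (energy_along_solution b g hg tau M R10 R20 x1 x2 s Hn Hs Hs') as [HY HEs].
  fold k p C0 in HEs.
  assert (HYb : Y1 <= Rabs (x2 s)).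
  { apply sqr_le_Rpower_lower; auto. pose proof (pow2_ge_0 (x1 s)). lra. }
  assert (Y1 ^ 2 <= x2 s ^ 2) by (rewrite <- (pow2_abs (x2 s)); apply pow_incr; lra).
  pose proof (pow2_ge_0 (x1 s)). nra.
Qed.

(* R1 decreases at rate at least beta until it reaches -1, after which R1' <= -R1^2 forces blowup
   within one more unit of time. *)
Lemma lifespan_bounded_energy_neg R10 R20 : b < 0 -> 0 <= R10 ->
  R10 ^ 2 + (2 * b / (g - 1)) * R20 ^ 2 < 0 -> exists T0, lifespan_bounded b g R10 R20 T0.
Proof.
  intros Hb HR HE. destruct (R1_derivative_le_neg_const R10 R20 Hb HE) as [beta [Hbeta Hder]].
  set (t1 := (R10 + 1) / beta). assert (Ht1 : 0 < t1) by (apply Rdiv_lt_0_compat; lra).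
  exists (t1 + 1). intros tau M x1 x2 Hs.
  destruct (Rle_dec tau t1) as [|Hlt]; [lra|]. apply Rnot_le_lt in Hlt.
  specialize (Hder tau M x1 x2 Hs).
  destruct Hs as [Ho [H1 [H2 [E1 [E2 Hbox]]]]].
  assert (Hlin : x1 t1 + beta * t1 <= x1 0 + beta * 0).
  { apply (derivable_nonpos_le_initial (fun s => x1 s + beta * s)
      (fun s => (- x1 s ^ 2 + b * x2 s ^ 2) + beta * 1) tau).
    - intros s Hs'. apply derivable_pt_lim_plus; [apply Ho; auto|].
      apply derivable_pt_lim_scal, derivable_pt_lim_id.
    - intros s Hs'. specialize (Hder s Hs'). lra.
    - apply right_cont0_plus; [exact H1|]. apply continuous_right_cont0.
      apply (continuous_mult (K := R_AbsRing)); [apply continuous_const| apply continuous_id].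
    - lra. }
  rewrite E1 in Hlin. assert (beta * t1 = R10 + 1) by (unfold t1; field; lra).
  assert (Hx1 : x1 t1 <= -1) by lra.
  assert (Hsh : tau - t1 <= - / x1 (t1 + 0)).
  { apply (riccati_lifespan (fun s => x1 (t1 + s))
      (fun s => - x1 (t1 + s) ^ 2 + b * x2 (t1 + s) ^ 2) (tau - t1)).
    - intros s Hs'. apply derivable_pt_lim_shift, Ho. lra.
    - intros s Hs'. pose proof (pow2_ge_0 (x2 (t1 + s))). nra.
    - apply continuous_right_cont0, (continuous_comp (fun s => t1 + s) x1).
      + apply (continuous_plus (V := R_NormedModule)); [apply continuous_const| apply continuous_id].
      + apply (derivable_pt_lim_continuous _ _ _ (proj1 (Ho (t1 + 0) ltac:(lra)))).
    - rewrite Rplus_0_r. lra. }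
  rewrite Rplus_0_r in Hsh.
  assert (- / x1 t1 <= 1); [|lra].
  apply Rmult_le_reg_r with (- x1 t1); [lra|].
  replace (- / x1 t1 * - x1 t1) with 1 by (field; lra). lra.
Qed.

Lemma lifespan_bounded_exists R10 R20 : ~ global_condition b g R10 R20 ->
  exists T0, lifespan_bounded b g R10 R20 T0.
Proof.
  intros Hn. unfold global_condition in Hn.
  destruct (Rlt_or_le R10 0) as [HR|HR].
  - exists (- / R10). apply lifespan_bounded_R1_neg; auto.
    destruct (Rle_or_lt b 0) as [|Hb]; [left; auto|right].
    destruct (Req_dec R20 0); auto. exfalso; apply Hn; right; left; split; auto.
  - assert (Hb : b < 0) by (destruct (Rlt_or_le b 0); auto; exfalso; apply Hn; left; lra).
    assert (Hz : R20 <> 0) by (intros Hz; apply Hn; right; right; right; split; auto; lra).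
    apply lifespan_bounded_energy_neg; auto.
    destruct (Rlt_or_le (R10 ^ 2 + (2 * b / (g - 1)) * R20 ^ 2) 0); auto.
    exfalso; apply Hn; right; right; left; split; auto; split; lra.
Qed.

End Blowup.

(** * Truncation, uniqueness and existence *)

Definition clamp M x := Rmax (- M) (Rmin M x).

Lemma clamp_abs_le M x : 0 <= M -> Rabs (clamp M x) <= M.
Proof.
  intros H. unfold clamp, Rmax, Rmin. repeat destruct Rle_dec; unfold Rabs; destruct Rcase_abs; lra.
Qed.

Lemma clamp_lipschitz M x y : 0 <= M -> Rabs (clamp M x - clamp M y) <= Rabs (x - y).
Proof.
  intros H. unfold clamp, Rmax, Rmin.
  repeat destruct Rle_dec; unfold Rabs; repeat destruct Rcase_abs; lra.
Qed.

Lemma clamp_id M x : Rabs x <= M -> clamp M x = x.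
Proof. intros H. apply Rabs_le_between in H. unfold clamp, Rmax, Rmin. repeat destruct Rle_dec; lra. Qed.

Lemma clamp_mult_lipschitz M a a' c c' : 0 <= M ->
  Rabs (clamp M a * clamp M a' - clamp M c * clamp M c') <= M * (Rabs (a - c) + Rabs (a' - c')).
Proof.
  intros HM.
  replace (clamp M a * clamp M a' - clamp M c * clamp M c')
    with (clamp M a * (clamp M a' - clamp M c') + clamp M c' * (clamp M a - clamp M c)) by ring.
  eapply Rle_trans; [apply Rabs_triang|]. rewrite !Rabs_mult.
  pose proof (clamp_abs_le M a HM). pose proof (clamp_abs_le M c' HM).
  pose proof (clamp_lipschitz M a c HM). pose proof (clamp_lipschitz M a' c' HM).
  pose proof (Rabs_pos (clamp M a)). pose proof (Rabs_pos (clamp M c')).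
  pose proof (Rabs_pos (clamp M a - clamp M c)). pose proof (Rabs_pos (clamp M a' - clamp M c')).
  nra.
Qed.

(* Clamping makes the field globally Lipschitz and bounded without changing it on the box. *)
Definition trunc_field1 b M a a' := - clamp M a ^ 2 + b * clamp M a' ^ 2.
Definition trunc_field2 g M a a' := - ((g + 1) / 2) * clamp M a * clamp M a'.

Lemma clamp_sqr_lipschitz M a c : 0 <= M ->
  Rabs (clamp M a ^ 2 - clamp M c ^ 2) <= 2 * M * Rabs (a - c).
Proof. intros HM. pose proof (clamp_mult_lipschitz M a a c c HM). simpl. rewrite !Rmult_1_r. lra. Qed.

Lemma clamp_mult_abs_le M a a' : 0 <= M -> Rabs (clamp M a * clamp M a') <= M ^ 2.
Proof.
  intros HM. rewrite Rabs_mult. pose proof (clamp_abs_le M a HM). pose proof (clamp_abs_le M a' HM).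
  pose proof (Rabs_pos (clamp M a)). pose proof (Rabs_pos (clamp M a')). simpl. nra.
Qed.

Lemma trunc_field1_lipschitz_bounded b g M : 1 < g -> 0 < M ->
  lipschitz_bounded (trunc_field1 b M) (2 * M * (1 + Rabs b + g)) (M ^ 2 * (1 + Rabs b + g)).
Proof.
  intros Hg HM. pose proof (Rabs_pos b). unfold trunc_field1. split.
  - intros a a' c c'.
    replace (- clamp M a ^ 2 + b * clamp M a' ^ 2 - (- clamp M c ^ 2 + b * clamp M c' ^ 2))
      with (- (clamp M a ^ 2 - clamp M c ^ 2) + b * (clamp M a' ^ 2 - clamp M c' ^ 2)) by ring.
    eapply Rle_trans; [apply Rabs_triang|]. rewrite Rabs_Ropp, Rabs_mult.
    pose proof (clamp_sqr_lipschitz M a c ltac:(lra)).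
    pose proof (clamp_sqr_lipschitz M a' c' ltac:(lra)).
    pose proof (Rabs_pos (a - c)). pose proof (Rabs_pos (a' - c')).
    assert (Rabs b * Rabs (clamp M a' ^ 2 - clamp M c' ^ 2) <= Rabs b * (2 * M * Rabs (a' - c')))
      by (apply Rmult_le_compat_l; lra).
    assert (0 <= M * Rabs b * Rabs (a - c)) by (apply Rmult_le_pos; [apply Rmult_le_pos|]; lra).
    assert (0 <= M * g * (Rabs (a - c) + Rabs (a' - c')))
      by (apply Rmult_le_pos; [apply Rmult_le_pos|]; lra).
    assert (0 <= M * Rabs (a' - c')) by (apply Rmult_le_pos; lra).
    nra.
  - intros a a'. eapply Rle_trans; [apply Rabs_triang|]. rewrite Rabs_Ropp, Rabs_mult.
    assert (Hsq : forall x, Rabs (clamp M x ^ 2) <= M ^ 2).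
    { intros x. rewrite <- RPow_abs. apply pow_incr. split; [apply Rabs_pos| apply clamp_abs_le; lra]. }
    pose proof (Hsq a). pose proof (Hsq a').
    assert (Rabs b * Rabs (clamp M a' ^ 2) <= Rabs b * M ^ 2) by (apply Rmult_le_compat_l; lra).
    pose proof (pow2_ge_0 M). nra.
Qed.

Lemma trunc_field2_lipschitz_bounded b g M : 1 < g -> 0 < M ->
  lipschitz_bounded (trunc_field2 g M) (2 * M * (1 + Rabs b + g)) (M ^ 2 * (1 + Rabs b + g)).
Proof.
  intros Hg HM. pose proof (Rabs_pos b). unfold trunc_field2. split.
  - intros a a' c c'.
    replace (- ((g + 1) / 2) * clamp M a * clamp M a' - - ((g + 1) / 2) * clamp M c * clamp M c')
      with (- ((g + 1) / 2) * (clamp M a * clamp M a' - clamp M c * clamp M c')) by ring.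
    rewrite Rabs_mult, Rabs_Ropp, (Rabs_right ((g + 1) / 2)) by lra.
    pose proof (clamp_mult_lipschitz M a a' c c' ltac:(lra)).
    set (S := Rabs (a - c) + Rabs (a' - c')) in *.
    assert (0 <= S) by (unfold S; pose proof (Rabs_pos (a - c)); pose proof (Rabs_pos (a' - c')); lra).
    apply Rle_trans with ((g + 1) / 2 * (M * S)); [apply Rmult_le_compat_l; lra|].
    assert (0 <= M * S * (1 + 2 * Rabs b + g)) by (apply Rmult_le_pos; [apply Rmult_le_pos|]; lra).
    nra.
  - intros a a'. rewrite Rmult_assoc, Rabs_mult, Rabs_Ropp, (Rabs_right ((g + 1) / 2)) by lra.
    pose proof (clamp_mult_abs_le M a a' ltac:(lra)). pose proof (pow2_ge_0 M). nra.
Qed.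

Lemma lipschitz_energy_estimate F1 F2 L B a1 a2 c1 c2 :
  lipschitz_bounded F1 L B -> lipschitz_bounded F2 L B ->
  2 * (a1 - c1) * (F1 a1 a2 - F1 c1 c2) + 2 * (a2 - c2) * (F2 a1 a2 - F2 c1 c2)
    <= 4 * L * ((a1 - c1) ^ 2 + (a2 - c2) ^ 2).
Proof.
  intros [H1 _] [H2 _].
  assert (HL : 0 <= L).
  { specialize (H1 1 0 0 0). rewrite !Rminus_0_r, Rabs_R1, Rabs_R0 in H1.
    pose proof (Rabs_pos (F1 1 0 - F1 0 0)). lra. }
  specialize (H1 a1 a2 c1 c2). specialize (H2 a1 a2 c1 c2).
  set (u := a1 - c1) in *. set (v := a2 - c2) in *.
  pose proof (Rle_abs (2 * u * (F1 a1 a2 - F1 c1 c2))).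
  pose proof (Rle_abs (2 * v * (F2 a1 a2 - F2 c1 c2))).
  rewrite !Rabs_mult, Rabs_right in * by lra.
  pose proof (Rabs_pos u). pose proof (Rabs_pos v).
  assert (Rabs u * Rabs (F1 a1 a2 - F1 c1 c2) <= Rabs u * (L * (Rabs u + Rabs v)))
    by (apply Rmult_le_compat_l; lra).
  assert (Rabs v * Rabs (F2 a1 a2 - F2 c1 c2) <= Rabs v * (L * (Rabs u + Rabs v)))
    by (apply Rmult_le_compat_l; lra).
  rewrite <- (pow2_abs u), <- (pow2_abs v).
  assert (0 <= L * (Rabs u - Rabs v) ^ 2) by (apply Rmult_le_pos; [lra| apply pow2_ge_0]).
  nra.
Qed.

Section Solutions.

Variables b g : R.
Hypothesis hg : 1 < g.

Lemma ode_on_trunc_field tau M x1 x2 t : 0 <= M -> ode_on b g 0 tau x1 x2 -> 0 < t < tau ->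
  Rabs (x1 t) <= M -> Rabs (x2 t) <= M ->
  derivable_pt_lim x1 t (trunc_field1 b M (x1 t) (x2 t)) /\
  derivable_pt_lim x2 t (trunc_field2 g M (x1 t) (x2 t)).
Proof.
  intros HM Ho Ht H1 H2. unfold trunc_field1, trunc_field2. rewrite !clamp_id by assumption.
  apply Ho, Ht.
Qed.

(* Inside the box the field is the Lipschitz truncated field, so the squared distance of two
   solutions grows at most exponentially from 0. *)
Lemma boxed_solution_unique tau M R10 R20 x1 x2 y1 y2 :
  boxed_solution b g tau M R10 R20 x1 x2 -> boxed_solution b g tau M R10 R20 y1 y2 ->
  forall t, 0 < t < tau -> x1 t = y1 t /\ x2 t = y2 t.
Proof.
  intros [Ho [H1 [H2 [E1 [E2 Hb]]]]] [Ho' [H1' [H2' [E1' [E2' Hb']]]]].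
  set (M' := Rabs M + 1).
  assert (HM' : 0 < M') by (unfold M'; pose proof (Rabs_pos M); lra).
  assert (HMM' : M <= M') by (unfold M'; pose proof (Rle_abs M); lra).
  pose proof (trunc_field1_lipschitz_bounded b g M' hg HM') as HF1.
  pose proof (trunc_field2_lipschitz_bounded b g M' hg HM') as HF2.
  set (D := fun t => (x1 t - y1 t) ^ 2 + (x2 t - y2 t) ^ 2).
  assert (HD : forall t, 0 < t < tau -> D t <= D 0 * exp (4 * (2 * M' * (1 + Rabs b + g)) * t)).
  { apply (gronwall_upper D (fun t =>
      2 * (x1 t - y1 t) * (trunc_field1 b M' (x1 t) (x2 t) - trunc_field1 b M' (y1 t) (y2 t)) +
      2 * (x2 t - y2 t) * (trunc_field2 g M' (x1 t) (x2 t) - trunc_field2 g M' (y1 t) (y2 t)))).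
    - intros t Ht. destruct (Hb t Ht) as [Bx1 Bx2]. destruct (Hb' t Ht) as [By1 By2].
      destruct (ode_on_trunc_field tau M' x1 x2 t ltac:(lra) Ho Ht ltac:(lra) ltac:(lra)) as [Dx1 Dx2].
      destruct (ode_on_trunc_field tau M' y1 y2 t ltac:(lra) Ho' Ht ltac:(lra) ltac:(lra)) as [Dy1 Dy2].
      apply derivable_pt_lim_plus; apply (derivable_pt_lim_sqr (fun s => _ s - _ s));
        apply derivable_pt_lim_minus; assumption.
    - intros t Ht. apply (lipschitz_energy_estimate _ _ _ _ _ _ _ _ HF1 HF2).
    - apply right_cont0_plus; apply right_cont0_sqr, right_cont0_plus; auto using right_cont0_opp. }
  intros t Ht. specialize (HD t Ht). unfold D in HD. rewrite E1, E2, E1', E2', !Rminus_eq_0 in HD.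
  simpl in HD. rewrite !Rmult_0_l, Rplus_0_l, Rmult_0_l in HD.
  pose proof (pow2_ge_0 (x1 t - y1 t)). pose proof (pow2_ge_0 (x2 t - y2 t)).
  simpl in *. split; apply Rminus_diag_uniq, Rsqr_0_uniq; unfold Rsqr; apply Rle_antisym; nra.
Qed.

Lemma boxed_solutions_agree tau tau' M M' R10 R20 x1 x2 y1 y2 :
  boxed_solution b g tau M R10 R20 x1 x2 -> boxed_solution b g tau' M' R10 R20 y1 y2 ->
  forall s, 0 <= s -> s < tau -> s < tau' -> x1 s = y1 s /\ x2 s = y2 s.
Proof.
  intros Hx Hy s Hs Ht Ht'. destruct (Rle_lt_or_eq_dec 0 s Hs) as [Hsp| <-].
  - assert (HM : 0 <= M /\ 0 <= M').
    { destruct Hx as [_ [_ [_ [_ [_ Bx]]]]]. destruct Hy as [_ [_ [_ [_ [_ By]]]]].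
      destruct (Bx s ltac:(lra)) as [Bx1 _]. destruct (By s ltac:(lra)) as [By1 _].
      pose proof (Rabs_pos (x1 s)). pose proof (Rabs_pos (y1 s)). lra. }
    apply (boxed_solution_unique (Rmin tau tau') (M + M') R10 R20);
      [| |split; [exact Hsp| apply Rmin_glb_lt; auto]].
    + apply (boxed_solution_mono _ _ _ _ _ _ _ _ _ _ Hx); [apply Rmin_l| lra].
    + apply (boxed_solution_mono _ _ _ _ _ _ _ _ _ _ Hy); [apply Rmin_r| lra].
  - destruct Hx as [_ [_ [_ [E1 [E2 _]]]]]. destruct Hy as [_ [_ [_ [E1' [E2' _]]]]].
    rewrite E1, E2, E1', E2'. auto.
Qed.

Definition trunc_solution M R10 R20 (y1 y2 : R -> R) :=
  y1 0 = R10 /\ y2 0 = R20 /\ (forall x, continuous y1 x /\ continuous y2 x) /\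
  forall t, 0 < t ->
    derivable_pt_lim y1 t (trunc_field1 b M (y1 t) (y2 t)) /\
    derivable_pt_lim y2 t (trunc_field2 g M (y1 t) (y2 t)).

Lemma trunc_solution_exists M R10 R20 : 0 < M -> exists y1 y2, trunc_solution M R10 R20 y1 y2.
Proof.
  intros HM. pose proof (trunc_field1_lipschitz_bounded b g M hg HM) as H1.
  pose proof (trunc_field2_lipschitz_bounded b g M hg HM) as H2.
  apply (picard_global_existence _ _ R10 R20 (2 * M * (1 + Rabs b + g)) (M ^ 2 * (1 + Rabs b + g)));
    [|exact H1| exact H2].
  pose proof (Rabs_pos b). apply Rmult_lt_0_compat; lra.
Qed.

Lemma trunc_solution_boxed M R10 R20 y1 y2 tau : 0 <= M -> trunc_solution M R10 R20 y1 y2 ->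
  (forall t, 0 <= t < tau -> Rabs (y1 t) + Rabs (y2 t) < M) -> boxed_solution b g tau M R10 R20 y1 y2.
Proof.
  intros HM [E1 [E2 [Hc Hd]]] Hb.
  assert (Hbox : forall t, 0 < t < tau -> Rabs (y1 t) <= M /\ Rabs (y2 t) <= M).
  { intros t Ht. specialize (Hb t ltac:(lra)).
    pose proof (Rabs_pos (y1 t)). pose proof (Rabs_pos (y2 t)).
    split; lra. }
  split; [|split; [|split; [|split; [|split]]]]; try (apply continuous_right_cont0, Hc); auto.
  intros t Ht. destruct (Hd t ltac:(lra)) as [D1 D2]. destruct (Hbox t Ht).
  unfold trunc_field1, trunc_field2 in D1, D2. rewrite !clamp_id in D1, D2 by assumption. auto.
Qed.

End Solutions.

Definition blowup_level R10 R20 (n : nat) := Rabs R10 + Rabs R20 + INR n + 1.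

Section Existence.

Variables b g : R.
Hypothesis hg : 1 < g.

Lemma global_solution_of_a_priori_bound R10 R20 B0 : a_priori_bound b g R10 R20 B0 ->
  exists R1 R2 : R -> R, ivp_sol_global b g R10 R20 R1 R2 /\
    exists M, forall t, 0 <= t -> Rabs (R1 t) + Rabs (R2 t) <= M.
Proof.
  intros Hab.
  set (B := Rabs B0 + Rabs R10 + Rabs R20).
  assert (HB : Rabs R10 + Rabs R20 <= B /\ B0 <= B /\ 0 <= B).
  { unfold B. pose proof (Rle_abs B0). pose proof (Rabs_pos B0). pose proof (Rabs_pos R10).
    pose proof (Rabs_pos R20). lra. }
  set (M := 2 * B + 1).
  assert (HM : 0 < M) by (unfold M; pose proof (Rabs_pos R10); pose proof (Rabs_pos R20); lra).
  destruct (trunc_solution_exists b g hg M R10 R20 HM) as [y1 [y2 Hts]].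
  pose proof Hts as [E1 [E2 [Hc _]]].
  set (N := fun t => Rabs (y1 t) + Rabs (y2 t)).
  assert (HNc : forall x, continuous N x).
  { intros x. apply (continuous_plus (V := R_NormedModule)); apply continuous_Rabs_comp, Hc. }
  assert (HN0 : N 0 <= B) by (unfold N; rewrite E1, E2; lra).
  (* At the first time N reached a level above 2 B, the solution would have stayed in the box
     before, where the a priori bound keeps N below 2 B. *)
  assert (Hall : forall t, 0 <= t -> N t <= 2 * B).
  { intros t0 Ht0. destruct (Rle_dec (N t0) (2 * B)) as [|Hn]; [auto| exfalso].
    set (Lv := Rmin (N t0) M).
    assert (HLv : 2 * B < Lv) by (unfold Lv, M; apply Rmin_glb_lt; lra).
    assert (HLvM : Lv <= M) by apply Rmin_r.
    destruct (first_exit_time N Lv t0 HNc ltac:(lra) Ht0 (Rmin_l _ _)) as [tau [Htau [Hlt Hge]]].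
    assert (Hs : boxed_solution b g tau M R10 R20 y1 y2).
    { apply (trunc_solution_boxed b g M); [lra| exact Hts|].
      intros t Ht. specialize (Hlt t Ht). unfold N in Hlt. lra. }
    assert (N tau <= 2 * B); [|lra].
    apply continuous_le_of_le_left; [apply HNc| lra|].
    intros y Hy. destruct (Hab tau M y1 y2 Hs y Hy). unfold N. lra. }
  exists y1, y2. split.
  - split; [|split; [|split; [|split]]]; try (apply continuous_right_cont0, Hc); auto.
    intros T HT. apply (trunc_solution_boxed b g M R10 R20 y1 y2 T); [lra| exact Hts|].
    intros t Ht. specialize (Hall t (proj1 Ht)). unfold N in Hall. unfold M. lra.
  - exists (2 * B). exact Hall.
Qed.

Lemma global_condition_of_bounded_solution R10 R20 :
  (exists R1 R2 : R -> R, ivp_sol_global b g R10 R20 R1 R2 /\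
     exists M, forall t, 0 <= t -> Rabs (R1 t) + Rabs (R2 t) <= M) -> global_condition b g R10 R20.
Proof.
  intros [R1 [R2 [[Ho [H1 [H2 [E1 E2]]]] [M HM]]]].
  apply NNPP. intros Hn. destruct (lifespan_bounded_exists b g hg R10 R20 Hn) as [T0 HT0].
  set (tau := Rabs T0 + 1). assert (Htau : 0 < tau) by (unfold tau; pose proof (Rabs_pos T0); lra).
  assert (tau <= T0); [|unfold tau in *; pose proof (Rle_abs T0); lra].
  apply (HT0 tau M R1 R2). split; [|split; [|split; [|split; [|split]]]]; auto.
  intros t Ht. specialize (HM t ltac:(lra)). pose proof (Rabs_pos (R1 t)). pose proof (Rabs_pos (R2 t)).
  split; lra.
Qed.

Lemma trunc_solution_exit_time T0 M R10 R20 y1 y2 : lifespan_bounded b g R10 R20 T0 -> 0 <= M ->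
  trunc_solution b g M R10 R20 y1 y2 -> Rabs R10 + Rabs R20 < M ->
  exists tau, 0 < tau /\ (forall t, 0 <= t < tau -> Rabs (y1 t) + Rabs (y2 t) < M) /\
    M <= Rabs (y1 tau) + Rabs (y2 tau).
Proof.
  intros HT0 HM Hts H0. pose proof Hts as [E1 [E2 [Hc _]]].
  destruct (classic (forall t, 0 <= t -> Rabs (y1 t) + Rabs (y2 t) < M)) as [Hall|Hno].
  - exfalso. assert (Rabs T0 + 1 <= T0); [|pose proof (Rle_abs T0); lra].
    apply (HT0 _ M y1 y2), (trunc_solution_boxed b g M); auto. intros t Ht. apply Hall, Ht.
  - apply not_all_ex_not in Hno. destruct Hno as [t0 Ht0].
    apply imply_to_and in Ht0. destruct Ht0 as [Ht0 Hge]. apply Rnot_lt_le in Hge.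
    destruct (first_exit_time (fun t => Rabs (y1 t) + Rabs (y2 t)) M t0) as [tau [Htau H]]; auto.
    + intros x. apply (continuous_plus (V := R_NormedModule)); apply continuous_Rabs_comp, Hc.
    + rewrite E1, E2. exact H0.
    + exists tau. split; [lra| exact H].
Qed.

Lemma glue_solutions (Y1 Y2 : nat -> R -> R) (tau : nat -> R) T0 :
  (forall n, 0 < tau n <= T0) -> (forall n, ode_on b g 0 (tau n) (Y1 n) (Y2 n)) ->
  (forall m n s, 0 <= s -> s < tau m -> s < tau n -> Y1 m s = Y1 n s /\ Y2 m s = Y2 n s) ->
  exists T X1 X2, (forall n, tau n <= T) /\ ode_on b g 0 T X1 X2 /\
    forall n t, 0 <= t < tau n -> X1 t = Y1 n t /\ X2 t = Y2 n t.
Proof.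
  intros Htau Ho Hun.
  set (E := fun x => exists n, x = tau n).
  destruct (completeness E) as [T [HTub HTlub]].
  { exists T0. intros x [n ->]. apply Htau. }
  { exists (tau 0%nat), 0%nat. reflexivity. }
  assert (HtT : forall n, tau n <= T) by (intros n; apply HTub; exists n; auto).
  assert (HbelT : forall t, t < T -> exists n, t < tau n).
  { intros t Ht. apply NNPP. intros Hno. assert (T <= t); [|lra].
    apply HTlub. intros x [n ->]. destruct (Rle_dec (tau n) t); auto.
    exfalso; apply Hno; exists n; lra. }
  set (k := fun t => epsilon (inhabits 0%nat) (fun n => t < tau n)).
  exists T, (fun t => Y1 (k t) t), (fun t => Y2 (k t) t). split; [exact HtT|].
  assert (Hkey : forall n t, 0 <= t < tau n -> Y1 (k t) t = Y1 n t /\ Y2 (k t) t = Y2 n t).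
  { intros n t Ht. apply Hun; [lra| |lra].
    apply (epsilon_spec (inhabits 0%nat) (fun n => t < tau n)). exists n. lra. }
  split; [|exact Hkey].
  intros t Ht. destruct (HbelT t (proj2 Ht)) as [n Hn].
  assert (Hnear : exists d, 0 < d /\ forall s, Rabs (s - t) < d -> 0 <= s < tau n).
  { exists (Rmin t (tau n - t)). split; [apply Rmin_pos; lra|].
    intros s Hs. pose proof (Rmin_l t (tau n - t)). pose proof (Rmin_r t (tau n - t)).
    apply Rabs_lt_between in Hs. lra. }
  destruct Hnear as [d [Hd Hs]]. destruct (Ho n t ltac:(lra)) as [D1 D2].
  destruct (Hkey n t ltac:(lra)) as [-> ->]. split.
  - apply (derivable_pt_lim_ext_near (Y1 n)); [|exact D1].
    exists d. split; [exact Hd|]. intros s Hds. symmetry. apply Hkey, Hs, Hds.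
  - apply (derivable_pt_lim_ext_near (Y2 n)); [|exact D2].
    exists d. split; [exact Hd|]. intros s Hds. symmetry. apply Hkey, Hs, Hds.
Qed.

Lemma exit_family R10 R20 T0 : lifespan_bounded b g R10 R20 T0 ->
  exists (Y1 Y2 : nat -> R -> R) (tau : nat -> R), forall n,
    trunc_solution b g (blowup_level R10 R20 n) R10 R20 (Y1 n) (Y2 n) /\ 0 < tau n /\
    (forall t, 0 <= t < tau n -> Rabs (Y1 n t) + Rabs (Y2 n t) < blowup_level R10 R20 n) /\
    blowup_level R10 R20 n <= Rabs (Y1 n (tau n)) + Rabs (Y2 n (tau n)).
Proof.
  intros HT0.
  assert (Hlev : forall n, Rabs R10 + Rabs R20 < blowup_level R10 R20 n /\ 0 < blowup_level R10 R20 n).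
  { intros n. unfold blowup_level. pose proof (pos_INR n). pose proof (Rabs_pos R10).
    pose proof (Rabs_pos R20). lra. }
  destruct (choice (fun n (p : (R -> R) * (R -> R)) =>
    trunc_solution b g (blowup_level R10 R20 n) R10 R20 (fst p) (snd p))) as [Y HY].
  { intros n. destruct (trunc_solution_exists b g hg (blowup_level R10 R20 n) R10 R20) as [y1 [y2 Hy]];
      [apply Hlev|]. exists (y1, y2). exact Hy. }
  destruct (choice (fun n tau => 0 < tau /\
    (forall t, 0 <= t < tau -> Rabs (fst (Y n) t) + Rabs (snd (Y n) t) < blowup_level R10 R20 n) /\
    blowup_level R10 R20 n <= Rabs (fst (Y n) tau) + Rabs (snd (Y n) tau))) as [tau Htau].
  { intros n. apply (trunc_solution_exit_time T0 _ R10 R20); auto; [left|]; apply Hlev. }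
  exists (fun n => fst (Y n)), (fun n => snd (Y n)), tau. intros n. split; [apply HY| apply Htau].
Qed.

(* Truncated solutions at levels |R10| + |R20| + n + 1 leave their boxes before the lifespan
   bound; they agree where both are defined, and their union is a solution on [0, T) that reaches
   every level. *)
Lemma finite_time_blowup R10 R20 : ~ global_condition b g R10 R20 ->
  exists T, T > 0 /\ exists R1 R2 : R -> R,
    ivp_sol_upto b g T R10 R20 R1 R2 /\
    forall M, exists t, 0 <= t < T /\ Rabs (R1 t) + Rabs (R2 t) > M.
Proof.
  intros Hn. destruct (lifespan_bounded_exists b g hg R10 R20 Hn) as [T0 HT0].
  destruct (exit_family R10 R20 T0 HT0) as [Y1 [Y2 [tau Hfam]]].
  assert (HsN : forall n, boxed_solution b g (tau n) (blowup_level R10 R20 n) R10 R20 (Y1 n) (Y2 n)).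
  { intros n. destruct (Hfam n) as [Hts [_ [Hlt _]]].
    apply (trunc_solution_boxed b g); auto. unfold blowup_level.
    pose proof (pos_INR n). pose proof (Rabs_pos R10). pose proof (Rabs_pos R20). lra. }
  destruct (glue_solutions Y1 Y2 tau T0) as [T [X1 [X2 [HtT [Ho Hkey]]]]].
  { intros n. split; [apply Hfam| apply (HT0 _ _ _ _ (HsN n))]. }
  { intros n. apply HsN. }
  { intros m n s Hs Hm Hn'.
    apply (boxed_solutions_agree b g hg _ _ _ _ _ _ _ _ _ _ (HsN m) (HsN n)); auto. }
  assert (Hpos0 : 0 < tau 0%nat) by apply Hfam.
  exists T. split; [specialize (HtT 0%nat); lra|]. exists X1, X2. split.
  - destruct (HsN 0%nat) as [_ [H1 [H2 [E1 [E2 _]]]]].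
    destruct (Hkey 0%nat 0 ltac:(lra)) as [K1 K2].
    split; [exact Ho|]. split; [|split; [|split]]; [| |congruence| congruence].
    + apply (right_cont0_agree (Y1 0%nat) X1 (tau 0%nat)); auto. intros t Ht. symmetry. apply Hkey, Ht.
    + apply (right_cont0_agree (Y2 0%nat) X2 (tau 0%nat)); auto. intros t Ht. symmetry. apply Hkey, Ht.
  - intros M. destruct (INR_archimed 1 M ltac:(lra)) as [n Hn']. rewrite Rmult_1_r in Hn'.
    destruct (Hfam n) as [[_ [_ [Hc _]]] [Hp [_ Hge]]].
    assert (HNc : continuous (fun t => Rabs (Y1 n t) + Rabs (Y2 n t)) (tau n))
      by (apply (continuous_plus (V := R_NormedModule)); apply continuous_Rabs_comp, Hc).
    destruct (proj1 (continuous_eps_delta _ _) HNc 1 ltac:(lra)) as [d [Hd Hnear]].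
    set (s := Rmax (tau n / 2) (tau n - d / 2)).
    assert (tau n / 2 <= s) by apply Rmax_l. assert (tau n - d / 2 <= s) by apply Rmax_r.
    assert (s < tau n) by (apply Rmax_lub_lt; lra).
    exists s. split; [specialize (HtT n); lra|].
    destruct (Hkey n s ltac:(lra)) as [-> ->].
    specialize (Hnear s ltac:(rewrite Rabs_left; lra)). apply Rabs_lt_between in Hnear.
    unfold blowup_level in Hge. pose proof (Rabs_pos R10). pose proof (Rabs_pos R20). lra.
Qed.

End Existence.

Theorem mainTheorem4 (g b : R) (hg : 1 < g) :
  (forall (a c : R) (R1 R2 : R -> R),
     ode_on b g a c R1 R2 ->
     (forall t, a < t < c -> R2 t <> 0) ->
     forall s t, a < s < c -> a < t < c ->
       invariant b g (R1 s) (R2 s) = invariant b g (R1 t) (R2 t)) /\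
  (forall R10 R20 : R,
     ((exists R1 R2 : R -> R, ivp_sol_global b g R10 R20 R1 R2 /\
         exists M, forall t, 0 <= t -> Rabs (R1 t) + Rabs (R2 t) <= M)
      <-> global_condition b g R10 R20) /\
     (~ global_condition b g R10 R20 ->
        exists T, T > 0 /\ exists R1 R2 : R -> R,
          ivp_sol_upto b g T R10 R20 R1 R2 /\
          forall M, exists t, 0 <= t < T /\ Rabs (R1 t) + Rabs (R2 t) > M)).
Proof.
  split; [exact (invariant_conserved b g hg)|].
  intros R10 R20. split; [split|].
  - apply global_condition_of_bounded_solution, hg.
  - intros Hc. destruct (a_priori_bound_exists b g hg R10 R20 Hc) as [B0 HB0].
    apply (global_solution_of_a_priori_bound b g hg R10 R20 B0 HB0).
  - apply finite_time_blowup, hg.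
Qed.
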